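(* Fix $0\le k<1$. For every $\eta>0$ there exists $\varepsilon_0>0$ such that the following holds: if $0\le\varepsilon<\varepsilon_0$ and $h:\mathbb{D}\to\mathbb{D}$ is holomorphic with $h(0)=\varepsilon$ and \[ h(r\mathbb{D})\subset \overline{B}\Big(\tfrac{1-r^2}{2},\tfrac{1+r^2}{2}\Big)\quad\text{for all } r\in(0,1), \] then $|h(k)|\le k^2+\eta$. In other words, $|h(k)|\le k^2+o(1)$ as $\varepsilon\to0$, uniformly over all such $h$.
   Context: $\mathbb{D}$ is the open unit disk, $r\mathbb{D}=\{|z|<r\}$, and $\overline{B}(c,\rho)$ is the closed disk with center $c$ and radius $\rho$ (so $\overline{B}((1-r^2)/2,(1+r^2)/2)$ is the closed disk with diameter $[-r^2,1]$). *)

From Stdlib Require Import Reals.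
From Coquelicot Require Import Coquelicot.
Open Scope R_scope.

Definition holomorphic_on_disk (h : C -> C) : Prop :=
  forall z : C, Cmod z < 1 -> @ex_derive C_AbsRing C_NormedModule h z.

Definition maps_disk_to_disk (h : C -> C) : Prop :=
  forall z : C, Cmod z < 1 -> Cmod (h z) < 1.

Definition closed_ball (c : C) (rho : R) (w : C) : Prop :=
  Cmod (w - c) <= rho.

From Stdlib Require Import Reals Lra Lia.
From Coquelicot Require Import Coquelicot.
Open Scope R_scope.

(* Write h(z) = eps + b z + f(z).  The argument has three steps.
   (1) A second-order Schwarz lemma: since |h| < 1 on the disk,
       |f(z)| <= (1 + eps + |b|) |z|^2.  It follows from a maximum principle
       applied to F(w) = f(u w) / w^2 (|u| = 1), which is holomorphic on the
       punctured disk and o(1/|w|) at 0.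
   (2) The ball condition with radius 2 sigma forces Re h >= -4 sigma^2 on the
       circle |z| = sigma; evaluating at z = -sigma conj(b)/|b| gives
       |b| <= 2 eps / sigma + 12 sigma.
   (3) Then |h(k)| <= eps + |b| k + (1 + eps + |b|) k^2 <= k^2 + 2 eps + 2 |b|,
       which is below k^2 + eta for a suitable sigma and eps small. *)

Lemma is_derive_epsilon {K : AbsRing} {V : NormedModule K} (f : K -> V) x l :
  is_derive f x l <->
  (forall eps, 0 < eps -> exists delta, 0 < delta /\ forall y,
     norm (minus y x) < delta ->
     norm (minus (minus (f y) (f x)) (scal (minus y x) l)) <= eps * norm (minus y x)).
Proof.
split.
- intros [_ H] eps Heps.
  specialize (H x (fun P H => H) (mkposreal eps Heps)).
  apply (locally_le_locally_norm (K:=K) (V:=AbsRing_NormedModule K) x) in H.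
  destruct H as [d Hd]. exists d. split; [apply cond_pos|].
  intros y Hy. apply (Hd y). exact Hy.
- intros H. split; [apply is_linear_scal_l|].
  intros x0 Hx0.
  assert (Hx : x0 = x) by (symmetry; apply (is_filter_lim_locally_unique x x0); exact Hx0).
  subst x0. intros eps. destruct (H eps (cond_pos eps)) as [d [Hd Hd']].
  apply (locally_norm_le_locally (K:=K) (V:=AbsRing_NormedModule K) x).
  exists (mkposreal d Hd). intros y Hy. apply Hd'. exact Hy.
Qed.

Lemma norm_C_R (x : C) : @norm R_AbsRing C_R_NormedModule x = Cmod x.
Proof.
destruct x as [a b]. unfold norm. simpl. unfold prod_norm, Cmod. simpl.
unfold norm; simpl. unfold abs; simpl.
rewrite !Rmult_1_r, <- (Rabs_mult a a), <- (Rabs_mult b b), !(Rabs_pos_eq (_ * _)) by nra; reflexivity.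
Qed.

Lemma scal_C_R (r : R) (y : C) : @scal R_AbsRing C_R_NormedModule r y = (RtoC r * y)%C.
Proof.
destruct y as [a b]. unfold scal; simpl. unfold prod_scal, Cmult, RtoC; simpl.
unfold scal; simpl. unfold mult; simpl. f_equal; ring.
Qed.

Definition Cderive (f : C -> C) (z l : C) := @is_derive C_AbsRing C_NormedModule f z l.
Definition Rderive (g : R -> C) (t : R) (v : C) := @is_derive R_AbsRing C_R_NormedModule g t v.

Definition holo (f : C -> C) (z : C) := @ex_derive C_AbsRing C_NormedModule f z.

Lemma Cderive_eps f z l : Cderive f z l <->
  (forall eps, 0 < eps -> exists delta, 0 < delta /\ forall w,
     Cmod (w - z) < delta -> Cmod (f w - f z - l * (w - z)) <= eps * Cmod (w - z)).
Proof.
unfold Cderive. rewrite is_derive_epsilon.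
split; intros H eps Heps; destruct (H eps Heps) as [d [Hd H']]; exists d; split; auto;
intros w Hw; specialize (H' w Hw).
- change (Cmod (f w - f z - (w - z) * l) <= eps * Cmod (w - z))%C in H'.
  rewrite Cmult_comm. exact H'.
- change (Cmod (f w - f z - (w - z) * l) <= eps * Cmod (w - z))%C.
  rewrite Cmult_comm. exact H'.
Qed.

Lemma Rderive_eps g t v : Rderive g t v <->
  (forall eps, 0 < eps -> exists delta, 0 < delta /\ forall s,
     Rabs (s - t) < delta -> Cmod (g s - g t - RtoC (s - t)%R * v) <= eps * Rabs (s - t)).
Proof.
unfold Rderive. rewrite is_derive_epsilon.
split; intros H eps Heps; destruct (H eps Heps) as [d [Hd H']]; exists d; split; auto;
intros w Hw.
- specialize (H' w Hw). rewrite norm_C_R, scal_C_R in H'. exact H'.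
- rewrite norm_C_R, scal_C_R. apply H'. exact Hw.
Qed.

(* Coquelicot's algebra lemmas for derivatives on an AbsRing use C viewed
   through AbsRing_NormedModule; both structures give the same derivative. *)
Lemma Cderive_AbsRing f z l :
  Cderive f z l <-> @is_derive C_AbsRing (AbsRing_NormedModule C_AbsRing) f z l.
Proof.
split; intros [H1 H2]; (split; [apply is_linear_scal_l|]); intros x Hx eps; apply (H2 x Hx eps).
Qed.

Definition Ccont (G : C -> C) (w : C) := forall eps, 0 < eps -> exists delta, 0 < delta /\
  forall w', Cmod (w' - w) < delta -> Cmod (G w' - G w) < eps.
Definition Rcont (f : R -> C) (x : R) := forall eps, 0 < eps -> exists delta, 0 < delta /\
  forall y, Rabs (y - x) < delta -> Cmod (f y - f x) < eps.

Lemma Rcont_continuous f x : Rcont f x -> @continuous R_UniformSpace C_R_NormedModule f x.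
Proof.
intros H. unfold continuous. apply (filterlim_locally (U:=C_R_NormedModule)).
intros eps. destruct (H eps (cond_pos eps)) as [d [Hd H']].
exists (mkposreal d Hd). intros y Hy. apply (norm_compat1 (K:=R_AbsRing) (V:=C_R_NormedModule)).
rewrite norm_C_R. apply H'. exact Hy.
Qed.

Lemma Cderive_local_lipschitz f z l : Cderive f z l ->
  exists d, 0 < d /\ forall w, Cmod (w - z) < d -> Cmod (f w - f z) <= (Cmod l + 1) * Cmod (w - z).
Proof.
intros H. rewrite Cderive_eps in H. destruct (H 1 Rlt_0_1) as [d [Hd H']].
exists d. split; auto. intros w Hw. specialize (H' w Hw).
replace (f w - f z)%C with ((f w - f z - l * (w - z)) + l * (w - z))%C by ring.
eapply Rle_trans. apply Cmod_triangle. rewrite Cmod_mult. lra.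
Qed.

Lemma Rderive_local_lipschitz g t v : Rderive g t v ->
  exists d, 0 < d /\ forall s, Rabs (s - t) < d -> Cmod (g s - g t) <= (Cmod v + 1) * Rabs (s - t).
Proof.
intros H. rewrite Rderive_eps in H. destruct (H 1 Rlt_0_1) as [d [Hd H']].
exists d. split; auto. intros s Hs. specialize (H' s Hs).
replace (g s - g t)%C with ((g s - g t - RtoC (s - t) * v) + RtoC (s - t) * v)%C by ring.
eapply Rle_trans. apply Cmod_triangle. rewrite Cmod_mult, Cmod_R. lra.
Qed.

Lemma Cderive_Ccont f z l : Cderive f z l -> Ccont f z.
Proof.
intros H eps Heps. destruct (Cderive_local_lipschitz f z l H) as [d [Hd H']].
set (L := Cmod l + 1). assert (HL : 0 < L) by (pose proof (Cmod_ge_0 l); unfold L; lra).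
exists (Rmin d (eps / L)). split. apply Rmin_pos; auto. apply Rdiv_lt_0_compat; lra.
intros w Hw.
assert (Hw1 : Cmod (w - z) < d) by (eapply Rlt_le_trans; [exact Hw | apply Rmin_l]).
assert (Hw2 : Cmod (w - z) < eps / L) by (eapply Rlt_le_trans; [exact Hw | apply Rmin_r]).
eapply Rle_lt_trans. apply H'; auto. fold L.
apply (Rmult_lt_compat_l L) in Hw2; auto. replace (L * (eps / L)) with eps in Hw2 by (field; lra). exact Hw2.
Qed.

Lemma Rderive_Rcont g t v : Rderive g t v -> Rcont g t.
Proof.
intros H eps Heps. destruct (Rderive_local_lipschitz g t v H) as [d [Hd H']].
set (L := Cmod v + 1). assert (HL : 0 < L) by (pose proof (Cmod_ge_0 v); unfold L; lra).
exists (Rmin d (eps / L)). split. apply Rmin_pos; auto. apply Rdiv_lt_0_compat; lra.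
intros s Hs.
assert (Hs1 : Rabs (s - t) < d) by (eapply Rlt_le_trans; [exact Hs | apply Rmin_l]).
assert (Hs2 : Rabs (s - t) < eps / L) by (eapply Rlt_le_trans; [exact Hs | apply Rmin_r]).
eapply Rle_lt_trans. apply H'; auto. fold L.
apply (Rmult_lt_compat_l L) in Hs2; auto. replace (L * (eps / L)) with eps in Hs2 by (field; lra). exact Hs2.
Qed.

Lemma holo_Ccont f z : holo f z -> Ccont f z.
Proof. intros [l H]. apply (Cderive_Ccont _ _ l H). Qed.

Lemma Rderive_comp (F : C -> C) (g : R -> C) t l v :
  Cderive F (g t) l -> Rderive g t v -> Rderive (fun s => F (g s)) t (l * v)%C.
Proof.
intros HF Hg. destruct (Rderive_local_lipschitz g t v Hg) as [d0 [Hd0 Hlip]].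
rewrite Cderive_eps in HF. rewrite Rderive_eps in Hg |- *.
intros eps Heps.
set (A := Cmod v + 1). assert (HA : 0 < A) by (pose proof (Cmod_ge_0 v); unfold A; lra).
set (L := Cmod l + 1). assert (HL : 0 < L) by (pose proof (Cmod_ge_0 l); unfold L; lra).
destruct (HF (eps / (2 * A))) as [d1 [Hd1 H1]]. apply Rdiv_lt_0_compat; lra.
destruct (Hg (eps / (2 * L))) as [d2 [Hd2 H2]]. apply Rdiv_lt_0_compat; lra.
exists (Rmin d0 (Rmin d2 (d1 / A))). split.
{ repeat apply Rmin_pos; auto. apply Rdiv_lt_0_compat; lra. }
intros s Hs.
assert (Hs0 : Rabs (s - t) < d0) by (eapply Rlt_le_trans; [exact Hs| apply Rmin_l]).
assert (Hs2 : Rabs (s - t) < d2)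
  by (eapply Rlt_le_trans; [exact Hs| eapply Rle_trans; [apply Rmin_r | apply Rmin_l]]).
assert (Hs1 : Rabs (s - t) < d1 / A)
  by (eapply Rlt_le_trans; [exact Hs| eapply Rle_trans; [apply Rmin_r | apply Rmin_r]]).
pose proof (Rabs_pos (s - t)). pose proof (Cmod_ge_0 l).
assert (Hgb : Cmod (g s - g t) <= A * Rabs (s - t)) by (apply Hlip; auto).
assert (Hgd : Cmod (g s - g t) < d1).
{ eapply Rle_lt_trans. exact Hgb. apply (Rmult_lt_compat_l A) in Hs1; auto.
  replace (A * (d1 / A)) with d1 in Hs1 by (field; lra). lra. }
specialize (H1 (g s) Hgd). specialize (H2 s Hs2).
replace (F (g s) - F (g t) - RtoC (s - t) * (l * v))%C with
  ((F (g s) - F (g t) - l * (g s - g t)) + l * (g s - g t - RtoC (s - t) * v))%C by ring.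
eapply Rle_trans. apply Cmod_triangle. rewrite Cmod_mult.
assert (X1 : eps / (2 * A) * Cmod (g s - g t) <= eps / 2 * Rabs (s - t)).
{ apply Rle_trans with (eps / (2 * A) * (A * Rabs (s - t))).
  apply Rmult_le_compat_l. apply Rlt_le, Rdiv_lt_0_compat; lra. exact Hgb.
  right. field. lra. }
assert (X2 : Cmod l * Cmod (g s - g t - RtoC (s - t) * v) <= eps / 2 * Rabs (s - t)).
{ apply Rle_trans with (L * (eps / (2 * L) * Rabs (s - t))).
  apply Rmult_le_compat; try apply Cmod_ge_0; auto. unfold L; lra.
  right. field. lra. }
lra.
Qed.

Lemma Cderive_mult f g z l1 l2 : Cderive f z l1 -> Cderive g z l2 ->
  Cderive (fun w => f w * g w)%C z (l1 * g z + f z * l2)%C.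
Proof.
rewrite !Cderive_AbsRing. intros H1 H2.
exact (@is_derive_mult C_AbsRing f g z l1 l2 H1 H2 Cmult_comm).
Qed.

Lemma Cderive_comp (F g : C -> C) z l v :
  Cderive F (g z) l -> Cderive g z v -> Cderive (fun w => F (g w)) z (l * v)%C.
Proof.
intros HF Hg. apply Cderive_AbsRing in Hg. rewrite Cmult_comm.
exact (@is_derive_comp C_AbsRing C_NormedModule F g z l v HF Hg).
Qed.

Lemma Cderive_inv (z : C) : z <> 0%C -> Cderive (fun w => / w)%C z (- / (z * z))%C.
Proof.
intros Hz. apply Cderive_eps. intros eps Heps.
assert (Hm : 0 < Cmod z) by (apply (proj1 (Cmod_gt_0 z)); exact Hz).
exists (Rmin (Cmod z / 2) (eps * Cmod z ^ 3 / 2)). split.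
{ apply Rmin_pos. lra. apply Rdiv_lt_0_compat. apply Rmult_lt_0_compat; auto. apply pow_lt; auto. lra. }
intros w Hw.
assert (Hw1 : Cmod (w - z) < Cmod z / 2) by (eapply Rlt_le_trans; [exact Hw | apply Rmin_l]).
assert (Hw2 : Cmod (w - z) < eps * Cmod z ^ 3 / 2) by (eapply Rlt_le_trans; [exact Hw | apply Rmin_r]).
assert (Hwz : Cmod z / 2 <= Cmod w).
{ pose proof (Cmod_triangle w (z - w)). replace (w + (z - w))%C with z in H by ring.
  replace (z - w)%C with (- (w - z))%C in H by ring. rewrite Cmod_opp in H. lra. }
assert (Hw0 : w <> 0%C). { intro E. subst. rewrite Cmod_0 in Hwz. lra. }
replace (/ w - / z - - / (z * z) * (w - z))%C with ((w - z) * (w - z) / (w * (z * z)))%C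
  by (field; auto).
rewrite Cmod_div. 2:{ apply Cmult_neq_0; auto. apply Cmult_neq_0; auto. }
rewrite !Cmod_mult.
pose proof (Cmod_ge_0 (w - z)).
apply Rle_trans with (Cmod (w - z) * (Cmod (w - z) / (Cmod z / 2 * (Cmod z * Cmod z)))).
- unfold Rdiv. rewrite Rmult_assoc. apply Rmult_le_compat_l; auto.
  apply Rmult_le_compat_l; auto. apply Rinv_le_contravar.
  apply Rmult_lt_0_compat. lra. nra. apply Rmult_le_compat_r. nra. auto.
- rewrite Rmult_comm. apply Rmult_le_compat_r; auto.
  apply Rle_trans with ((eps * Cmod z ^ 3 / 2) / (Cmod z / 2 * (Cmod z * Cmod z))).
  apply Rmult_le_compat_r. apply Rlt_le, Rinv_0_lt_compat. nra. lra.
  right. field. lra.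
Qed.

Lemma holo_const (c z : C) : holo (fun _ => c) z.
Proof. apply (ex_derive_const (K:=C_AbsRing) (V:=C_NormedModule)). Qed.

Lemma holo_id (z : C) : holo (fun w => w) z.
Proof. exists (RtoC 1). apply Cderive_AbsRing. apply (is_derive_id (K:=C_AbsRing)). Qed.

Lemma holo_plus f g z : holo f z -> holo g z -> holo (fun w => f w + g w)%C z.
Proof. intros H1 H2. apply (ex_derive_plus (K:=C_AbsRing) (V:=C_NormedModule) f g z H1 H2). Qed.

Lemma holo_minus f g z : holo f z -> holo g z -> holo (fun w => f w - g w)%C z.
Proof. intros H1 H2. apply (ex_derive_minus (K:=C_AbsRing) (V:=C_NormedModule) f g z H1 H2). Qed.

Lemma holo_mult f g z : holo f z -> holo g z -> holo (fun w => f w * g w)%C z.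
Proof. intros [l1 H1] [l2 H2]. eexists. apply Cderive_mult; eauto. Qed.

Lemma holo_comp f g z : holo f (g z) -> holo g z -> holo (fun w => f (g w)) z.
Proof. intros [l1 H1] [l2 H2]. eexists. apply Cderive_comp; eauto. Qed.

Lemma holo_inv f z : holo f z -> f z <> 0%C -> holo (fun w => / f w)%C z.
Proof.
intros H1 H2. apply (holo_comp (fun w => / w)%C f z); auto.
eexists. apply Cderive_inv. auto.
Qed.

Lemma holo_div f g z : holo f z -> holo g z -> g z <> 0%C -> holo (fun w => f w / g w)%C z.
Proof. intros. unfold Cdiv. apply holo_mult; auto. apply holo_inv; auto. Qed.

Definition cis (t : R) : C := (cos t, sin t).
Definition polar (r t : R) : C := (r * cos t, r * sin t).

Lemma polar_cis r t : polar r t = (RtoC r * cis t)%C.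
Proof. unfold polar, cis, RtoC, Cmult; simpl. f_equal; ring. Qed.

Lemma Cmod_le_abs_sum (x : C) : Cmod x <= Rabs (fst x) + Rabs (snd x).
Proof.
destruct x as [a b]; unfold Cmod; simpl.
rewrite <- (sqrt_square (Rabs a + Rabs b)) by (pose proof (Rabs_pos a); pose proof (Rabs_pos b); lra).
apply sqrt_le_1_alt.
pose proof (Rabs_pos a); pose proof (Rabs_pos b).
assert (a*a = Rabs a * Rabs a) by (rewrite <- Rabs_mult; rewrite Rabs_pos_eq; nra).
assert (b*b = Rabs b * Rabs b) by (rewrite <- Rabs_mult; rewrite Rabs_pos_eq; nra).
pose proof (Rmult_le_pos _ _ H H0). simpl. nra.
Qed.

Lemma Cmod_cis t : Cmod (cis t) = 1.
Proof.
unfold Cmod, cis; simpl. transitivity (sqrt 1). 2: apply sqrt_1. f_equal.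
pose proof (sin2_cos2 t). unfold Rsqr in H. nra.
Qed.

Lemma Cmod_polar r t : 0 <= r -> Cmod (polar r t) = r.
Proof.
intros Hr. rewrite polar_cis, Cmod_mult, Cmod_cis, Cmod_R, Rabs_pos_eq by lra. ring.
Qed.

Lemma Rabs_sin_le_pos x : 0 <= x -> Rabs (sin x) <= x.
Proof.
intros Hx. pose proof (SIN_bound x). pose proof PI2_3_2 as HPI.
destruct (Rle_dec 1 x). apply Rabs_le; lra.
destruct (Req_dec x 0). subst. rewrite sin_0, Rabs_R0. lra.
pose proof (sin_lt_x x). pose proof (sin_ge_0 x).
rewrite Rabs_pos_eq; lra.
Qed.

Lemma Rabs_sin_le x : Rabs (sin x) <= Rabs x.
Proof.
destruct (Rle_dec 0 x).
- rewrite (Rabs_pos_eq x) by lra. apply Rabs_sin_le_pos; lra.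
- rewrite (Rabs_left x) by lra. rewrite <- Rabs_Ropp, <- sin_neg. apply Rabs_sin_le_pos; lra.
Qed.

Lemma cis_lipschitz t s : Cmod (cis t - cis s) <= Rabs (t - s).
Proof.
unfold Cmod, cis; simpl.
rewrite <- (sqrt_square (Rabs (t - s))) by apply Rabs_pos.
apply sqrt_le_1_alt.
assert (E0 : forall s u, (cos (s + 2 * u) - cos s) ^ 2 + (sin (s + 2 * u) + - sin s) ^ 2 = 4 * (sin u) ^ 2).
{ intros s0 u. rewrite cos_plus, sin_plus, cos_2a, sin_2a.
  pose proof (sin2_cos2 s0). pose proof (sin2_cos2 u). unfold Rsqr in *. nra. }
assert (E : (cos t - cos s) ^ 2 + (sin t + - sin s) ^ 2 = 4 * (sin ((t - s)/2)) ^ 2).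
{ rewrite <- (E0 s ((t - s)/2)). replace (s + 2 * ((t - s) / 2)) with t by field. reflexivity. }
simpl in E.
change (cos t + - cos s) with (cos t - cos s). rewrite E.
pose proof (Rabs_sin_le ((t - s)/2)).
assert (H0 : Rabs ((t - s) / 2) = Rabs (t - s) / 2).
{ unfold Rdiv. rewrite Rabs_mult, (Rabs_pos_eq (/2)) by lra. ring. }
rewrite H0 in H.
set (q := sin ((t - s) / 2)) in *.
assert (q * q = Rabs q * Rabs q) by (rewrite <- Rabs_mult; rewrite Rabs_pos_eq; nra).
pose proof (Rabs_pos q).
assert (Rabs q * Rabs q <= (Rabs (t - s) / 2) * (Rabs (t - s) / 2)) by (apply Rmult_le_compat; lra).
nra.
Qed.

Lemma polar_lipschitz r t r' t' : Cmod (polar r t - polar r' t') <= Rabs (r - r') + Rabs r' * Rabs (t - t').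
Proof.
replace (polar r t - polar r' t')%C with (RtoC (r - r') * cis t + RtoC r' * (cis t - cis t'))%C.
2:{ rewrite !polar_cis. unfold RtoC, Cmult, Cminus, Cplus, Copp; simpl. f_equal; ring. }
eapply Rle_trans. apply Cmod_triangle.
rewrite !Cmod_mult, !Cmod_R, Cmod_cis.
pose proof (cis_lipschitz t t'). pose proof (Rabs_pos r').
nra.
Qed.

Lemma Rderive_pair (f g : R -> R) t a b :
  is_derive f t a -> is_derive g t b -> Rderive (fun s => (f s, g s)) t (a, b).
Proof.
intros Hf Hg. apply Rderive_eps. intros eps Heps.
pose proof (proj1 (is_derive_epsilon (K:=R_AbsRing) (V:=R_NormedModule) f t a) Hf) as Hf'.
pose proof (proj1 (is_derive_epsilon (K:=R_AbsRing) (V:=R_NormedModule) g t b) Hg) as Hg'.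
clear Hf Hg. rename Hf' into Hf. rename Hg' into Hg.
destruct (Hf (eps/2)) as [d1 [Hd1 H1]]. lra.
destruct (Hg (eps/2)) as [d2 [Hd2 H2]]. lra.
exists (Rmin d1 d2). split. apply Rmin_pos; auto.
intros s Hs. eapply Rle_trans. apply Cmod_le_abs_sum.
simpl. specialize (H1 s). specialize (H2 s).
change (norm (minus s t)) with (Rabs (s - t)) in H1, H2.
assert (Hs1 : Rabs (s - t) < d1) by (eapply Rlt_le_trans; [exact Hs| apply Rmin_l]).
assert (Hs2 : Rabs (s - t) < d2) by (eapply Rlt_le_trans; [exact Hs| apply Rmin_r]).
specialize (H1 Hs1). specialize (H2 Hs2).
change (Rabs (f s - f t - (s - t) * a) <= eps / 2 * Rabs (s - t)) in H1.
change (Rabs (g s - g t - (s - t) * b) <= eps / 2 * Rabs (s - t)) in H2.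
replace (f s + - f t + - ((s - t) * a - 0 * b)) with (f s - f t - (s - t) * a) by ring.
replace (g s + - g t + - ((s - t) * b + 0 * a)) with (g s - g t - (s - t) * b) by ring.
lra.
Qed.

Lemma Rderive_polar_r r t : Rderive (fun r => polar r t) r (cis t).
Proof.
apply Rderive_eps. intros eps Heps. exists 1. split. lra. intros s Hs.
replace (polar s t - polar r t - RtoC (s - r) * cis t)%C with (RtoC 0).
rewrite Cmod_R, Rabs_R0. pose proof (Rabs_pos (s - r)). nra.
unfold polar, cis, RtoC, Cmult, Cminus, Cplus, Copp; simpl. f_equal; ring.
Qed.

Lemma Rderive_polar_t r t : Rderive (fun t => polar r t) t (Ci * polar r t)%C.
Proof.
replace (Ci * polar r t)%C with (r * - sin t, r * cos t).
apply Rderive_pair.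
apply is_derive_scal. apply is_derive_cos.
apply is_derive_scal. apply is_derive_sin.
unfold Ci, polar, Cmult; simpl. f_equal; ring.
Qed.

Lemma Rcont_comp (G : C -> C) (g : R -> C) x : Rcont g x -> Ccont G (g x) -> Rcont (fun y => G (g y)) x.
Proof.
intros H1 H2 eps Heps. destruct (H2 eps Heps) as [d [Hd H']].
destruct (H1 d Hd) as [d2 [Hd2 H'']]. exists d2. split; [exact Hd2|].
intros y Hy. apply H'. apply H''. exact Hy.
Qed.

Lemma Rcont_mult (f g : R -> C) x : Rcont f x -> Rcont g x -> Rcont (fun y => f y * g y)%C x.
Proof.
intros H1 H2 eps Heps.
set (A := Cmod (f x) + 1). set (B := Cmod (g x) + 1).
assert (HA : 0 < A) by (pose proof (Cmod_ge_0 (f x)); unfold A; lra).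
assert (HB : 0 < B) by (pose proof (Cmod_ge_0 (g x)); unfold B; lra).
destruct (H1 (Rmin 1 (eps / (2 * B)))) as [d1 [Hd1 K1]]. apply Rmin_pos. lra. apply Rdiv_lt_0_compat; lra.
destruct (H2 (eps / (2 * (A + 1)))) as [d2 [Hd2 K2]]. apply Rdiv_lt_0_compat; lra.
exists (Rmin d1 d2). split. apply Rmin_pos; auto.
intros y Hy.
assert (Y1 : Rabs (y - x) < d1) by (eapply Rlt_le_trans; [exact Hy | apply Rmin_l]).
assert (Y2 : Rabs (y - x) < d2) by (eapply Rlt_le_trans; [exact Hy | apply Rmin_r]).
specialize (K1 y Y1). specialize (K2 y Y2).
pose proof (Rmin_l 1 (eps / (2 * B))). pose proof (Rmin_r 1 (eps / (2 * B))).
replace (f y * g y - f x * g x)%C with ((f y - f x) * g x + f y * (g y - g x))%C by ring.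
eapply Rle_lt_trans. apply Cmod_triangle. rewrite !Cmod_mult.
assert (Fy : Cmod (f y) <= A + 1).
{ replace (f y) with ((f y - f x) + f x)%C by ring. eapply Rle_trans. apply Cmod_triangle. unfold A. lra. }
assert (P1 : Cmod (f y - f x) * Cmod (g x) <= eps / 2).
{ apply Rle_trans with ((eps / (2 * B)) * B).
  apply Rmult_le_compat. apply Cmod_ge_0. apply Cmod_ge_0. lra. unfold B; lra.
  right. field. lra. }
assert (P2 : Cmod (f y) * Cmod (g y - g x) < eps / 2).
{ apply Rle_lt_trans with ((A + 1) * Cmod (g y - g x)).
  apply Rmult_le_compat_r. apply Cmod_ge_0. auto.
  apply Rlt_le_trans with ((A + 1) * (eps / (2 * (A + 1)))).
  apply Rmult_lt_compat_l. lra. auto. right. field. lra. }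
lra.
Qed.

Lemma Rcont_const (c : C) x : Rcont (fun _ => c) x.
Proof. intros eps Heps. exists 1. split. lra. intros. replace (c - c)%C with (RtoC 0) by ring. rewrite Cmod_0. auto. Qed.

Lemma Rcont_polar_r r t : Rcont (fun r => polar r t) r.
Proof. apply (Rderive_Rcont _ _ _ (Rderive_polar_r r t)). Qed.

Lemma Rcont_polar_t r t : Rcont (fun t => polar r t) t.
Proof. apply (Rderive_Rcont _ _ _ (Rderive_polar_t r t)). Qed.

Definition CInt (f : R -> C) (a b : R) : C := @RInt C_R_CompleteNormedModule f a b.
Definition is_CInt (f : R -> C) (a b : R) (l : C) := @is_RInt C_R_NormedModule f a b l.
Definition ex_CInt (f : R -> C) (a b : R) := @ex_RInt C_R_NormedModule f a b.

Lemma CInt_correct f a b : ex_CInt f a b -> is_CInt f a b (CInt f a b).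
Proof. intros H. apply (RInt_correct (V:=C_R_CompleteNormedModule)). exact H. Qed.

Lemma CInt_unique f a b l : is_CInt f a b l -> CInt f a b = l.
Proof. intros H. apply (is_RInt_unique (V:=C_R_CompleteNormedModule)). exact H. Qed.

Lemma ex_CInt_cont f a b : a <= b ->
  (forall x, a <= x <= b -> @continuous R_UniformSpace C_R_NormedModule f x) -> ex_CInt f a b.
Proof.
intros Hab H. apply (ex_RInt_continuous (V:=C_R_CompleteNormedModule)).
intros z Hz. rewrite Rmin_left, Rmax_right in Hz by lra. apply H. exact Hz.
Qed.

Lemma is_CInt_plus f g a b lf lg : is_CInt f a b lf -> is_CInt g a b lg ->
  is_CInt (fun x => f x + g x)%C a b (lf + lg)%C.
Proof. intros Hf Hg. apply (is_RInt_plus (V:=C_R_NormedModule) f g a b lf lg Hf Hg). Qed.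

Lemma is_CInt_minus f g a b lf lg : is_CInt f a b lf -> is_CInt g a b lg ->
  is_CInt (fun x => f x - g x)%C a b (lf - lg)%C.
Proof. intros Hf Hg. apply (is_RInt_minus (V:=C_R_NormedModule) f g a b lf lg Hf Hg). Qed.

Lemma is_CInt_mult_l f a b (c : C) lf : is_CInt f a b lf -> is_CInt (fun x => c * f x)%C a b (c * lf)%C.
Proof.
intros Hf.
destruct c as [c1 c2].
assert (H1 := is_RInt_fct_extend_fst (U:=R_NormedModule) (V:=R_NormedModule) f a b lf Hf).
assert (H2 := is_RInt_fct_extend_snd (U:=R_NormedModule) (V:=R_NormedModule) f a b lf Hf).
unfold is_CInt.
replace ((c1, c2) * lf)%C with ((c1 * fst lf - c2 * snd lf), (c1 * snd lf + c2 * fst lf)).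
2:{ destruct lf; unfold Cmult; simpl. f_equal; ring. }
apply (is_RInt_fct_extend_pair (U:=R_NormedModule) (V:=R_NormedModule)).
- eapply is_RInt_ext.
  2: { apply (is_RInt_minus (V:=R_NormedModule)).
       apply (is_RInt_scal (V:=R_NormedModule)). exact H1.
       apply (is_RInt_scal (V:=R_NormedModule)). exact H2. }
  intros x _. unfold Cmult; simpl. unfold minus, plus, opp, scal; simpl.
  unfold mult; simpl. ring.
- eapply is_RInt_ext.
  2: { apply (is_RInt_plus (V:=R_NormedModule)).
       apply (is_RInt_scal (V:=R_NormedModule)). exact H2.
       apply (is_RInt_scal (V:=R_NormedModule)). exact H1. }
  intros x _. unfold Cmult; simpl. unfold minus, plus, opp, scal; simpl.
  unfold mult; simpl. ring.
Qed.

Lemma is_CInt_ext f g a b l : (forall x, Rmin a b <= x <= Rmax a b -> f x = g x) -> is_CInt f a b l -> is_CInt g a b l.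
Proof.
intros H Hf. apply (is_RInt_ext (V:=C_R_NormedModule) f). intros x Hx. apply H. lra. exact Hf.
Qed.

Lemma CInt_Chasles f a b c : ex_CInt f a b -> ex_CInt f b c -> (CInt f a b + CInt f b c)%C = CInt f a c.
Proof. intros H1 H2. apply (RInt_Chasles (V:=C_R_CompleteNormedModule)); auto. Qed.

Lemma CInt_bound_fun f g a b lg : a <= b -> ex_CInt f a b -> is_RInt g a b lg ->
  (forall x, a <= x <= b -> Cmod (f x) <= g x) -> Cmod (CInt f a b) <= lg.
Proof.
intros Hab Hex Hg HB.
rewrite <- norm_C_R.
apply (norm_RInt_le (V:=C_R_NormedModule) f g a b (CInt f a b) lg); auto.
intros x Hx. rewrite norm_C_R. apply HB. auto.
apply CInt_correct. auto.
Qed.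

Lemma CInt_bound f a b B : a <= b -> ex_CInt f a b ->
  (forall x, a <= x <= b -> Cmod (f x) <= B) -> Cmod (CInt f a b) <= (b - a) * B.
Proof.
intros Hab Hex HB. apply (CInt_bound_fun f (fun _ => B)); auto.
replace ((b - a) * B) with (@scal R_AbsRing R_NormedModule (b - a) B).
- apply (is_RInt_const (V:=R_NormedModule)).
- unfold scal; simpl. unfold mult; simpl. ring.
Qed.

Lemma CInt_FTC (F f : R -> C) a b : a <= b ->
  (forall x, a <= x <= b -> Rderive F x (f x)) ->
  (forall x, a <= x <= b -> @continuous R_UniformSpace C_R_NormedModule f x) ->
  is_CInt f a b (F b - F a)%C.
Proof.
intros Hab HD Hc.
apply (is_RInt_derive (V:=C_R_CompleteNormedModule) F f a b).
intros x Hx. rewrite Rmin_left, Rmax_right in Hx by lra. apply HD. auto.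
intros x Hx. rewrite Rmin_left, Rmax_right in Hx by lra. apply Hc. auto.
Qed.

(* Contour integrals of G along the ray of angle th (radii a..b), along the
   circle of radius rho (angles al..be), and around the boundary of the polar
   rectangle [a, b] x [al, be], traversed counterclockwise. *)
Definition radial_fn G th := fun r => (G (polar r th) * cis th)%C.
Definition arc_fn G rho := fun t => (G (polar rho t) * (Ci * polar rho t))%C.
Definition radial_int G th a b := CInt (radial_fn G th) a b.
Definition arc_int G rho al be := CInt (arc_fn G rho) al be.
Definition rect_int G a b al be := (radial_int G al a b + arc_int G b al be - radial_int G be a b - arc_int G a al be)%C.

Lemma Rcont_radial_fn G th r : Ccont G (polar r th) -> Rcont (radial_fn G th) r.
Proof.
intros H. unfold radial_fn. apply Rcont_mult. apply (Rcont_comp G (fun r => polar r th)). apply Rcont_polar_r. exact H.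
apply Rcont_const.
Qed.

Lemma Rcont_arc_fn G rho t : Ccont G (polar rho t) -> Rcont (arc_fn G rho) t.
Proof.
intros H. unfold arc_fn. apply Rcont_mult. apply (Rcont_comp G (fun t => polar rho t)). apply Rcont_polar_t. exact H.
apply Rcont_mult. apply Rcont_const. apply Rcont_polar_t.
Qed.

Lemma ex_radial_int G th a b : a <= b -> (forall r, a <= r <= b -> Ccont G (polar r th)) ->
  ex_CInt (radial_fn G th) a b.
Proof. intros Hab H. apply ex_CInt_cont; auto. intros. apply Rcont_continuous, Rcont_radial_fn. auto. Qed.

Lemma ex_arc_int G rho al be : al <= be -> (forall t, al <= t <= be -> Ccont G (polar rho t)) ->
  ex_CInt (arc_fn G rho) al be.
Proof. intros Hab H. apply ex_CInt_cont; auto. intros. apply Rcont_continuous, Rcont_arc_fn. auto. Qed.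

Definition edges_cont G a b al be :=
  (forall r, a <= r <= b -> Ccont G (polar r al) /\ Ccont G (polar r be)) /\
  (forall t, al <= t <= be -> Ccont G (polar a t) /\ Ccont G (polar b t)).

(* Boundary integrals are additive under subdivision of the rectangle:
   the shared edge is traversed twice in opposite directions. *)
Lemma rect_int_split_r G a c b al be : a <= c -> c <= b -> al <= be ->
  edges_cont G a c al be -> edges_cont G c b al be ->
  rect_int G a b al be = (rect_int G a c al be + rect_int G c b al be)%C.
Proof.
intros H1 H2 H3 [E1 E2] [E3 E4].
unfold rect_int, radial_int.
rewrite <- (CInt_Chasles (radial_fn G al) a c b), <- (CInt_Chasles (radial_fn G be) a c b).
ring.
all: apply ex_radial_int; auto; intros r Hr; try apply (E1 r Hr); try apply (E3 r Hr).
Qed.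

Lemma rect_int_split_t G a b al ga be : a <= b -> al <= ga -> ga <= be ->
  edges_cont G a b al ga -> edges_cont G a b ga be ->
  rect_int G a b al be = (rect_int G a b al ga + rect_int G a b ga be)%C.
Proof.
intros H1 H2 H3 [E1 E2] [E3 E4].
unfold rect_int, arc_int.
rewrite <- (CInt_Chasles (arc_fn G b) al ga be), <- (CInt_Chasles (arc_fn G a) al ga be).
ring.
all: apply ex_arc_int; auto; intros r Hr; try apply (E2 r Hr); try apply (E4 r Hr).
Qed.

Lemma Cmod_Ci_polar r t : 0 <= r -> Cmod (Ci * polar r t) = r.
Proof.
intros Hr. rewrite Cmod_mult, Cmod_polar by auto.
replace (Cmod Ci) with 1. ring.
unfold Cmod, Ci; simpl. symmetry. transitivity (sqrt 1). f_equal. ring. apply sqrt_1.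
Qed.

Lemma rect_int_bound G a b al be B : 0 <= a -> a <= b -> al <= be -> edges_cont G a b al be ->
  (forall r, a <= r <= b -> Cmod (G (polar r al)) <= B /\ Cmod (G (polar r be)) <= B) ->
  (forall t, al <= t <= be -> Cmod (G (polar a t)) <= B /\ Cmod (G (polar b t)) <= B) ->
  Cmod (rect_int G a b al be) <= (2 * (b - a) + (a + b) * (be - al)) * B.
Proof.
intros Ha Hab Hal [E1 E2] B1 B2.
assert (R1 : forall th, (forall r, a <= r <= b -> Ccont G (polar r th) /\ Cmod (G (polar r th)) <= B) ->
  Cmod (radial_int G th a b) <= (b - a) * B).
{ intros th Hth. apply CInt_bound; auto. apply ex_radial_int; auto. intros; apply Hth; auto.
  intros x Hx. unfold radial_fn. rewrite Cmod_mult, Cmod_cis, Rmult_1_r. apply Hth; auto. }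
assert (R2 : forall rho, 0 <= rho -> (forall t, al <= t <= be -> Ccont G (polar rho t) /\ Cmod (G (polar rho t)) <= B) ->
  Cmod (arc_int G rho al be) <= (be - al) * (rho * B)).
{ intros rho Hrho Hth. apply CInt_bound; auto. apply ex_arc_int; auto. intros; apply Hth; auto.
  intros x Hx. unfold arc_fn. rewrite Cmod_mult, Cmod_Ci_polar by auto.
  rewrite Rmult_comm. apply Rmult_le_compat_l; auto. apply Hth; auto. }
assert (X1 : Cmod (radial_int G al a b) <= (b - a) * B)
  by (apply R1; intros r Hr; split; [apply E1|apply B1]; auto).
assert (X2 : Cmod (radial_int G be a b) <= (b - a) * B)
  by (apply R1; intros r Hr; split; [apply E1|apply B1]; auto).
assert (X3 : Cmod (arc_int G a al be) <= (be - al) * (a * B))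
  by (apply R2; auto; intros r Hr; split; [apply E2|apply B2]; auto).
assert (X4 : Cmod (arc_int G b al be) <= (be - al) * (b * B))
  by (apply R2; try lra; intros r Hr; split; [apply E2|apply B2]; auto).
unfold rect_int.
eapply Rle_trans. apply Cmod_triangle.
eapply Rle_trans. apply Rplus_le_compat_r. apply Cmod_triangle.
eapply Rle_trans. apply Rplus_le_compat_r. apply Rplus_le_compat_r. apply Cmod_triangle.
rewrite !Cmod_opp.
nra.
Qed.

Lemma radial_int_primitive K g th a b : a <= b ->
  (forall r, a <= r <= b -> Cderive K (polar r th) (g (polar r th)) /\ Ccont g (polar r th)) ->
  radial_int g th a b = (K (polar b th) - K (polar a th))%C.
Proof.
intros Hab H. unfold radial_int. apply CInt_unique.
apply (CInt_FTC (fun r => K (polar r th))); auto.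
- intros x Hx. unfold radial_fn. apply Rderive_comp. apply H; auto. apply Rderive_polar_r.
- intros x Hx. apply Rcont_continuous, Rcont_radial_fn. apply H; auto.
Qed.

Lemma arc_int_primitive K g rho al be : al <= be ->
  (forall t, al <= t <= be -> Cderive K (polar rho t) (g (polar rho t)) /\ Ccont g (polar rho t)) ->
  arc_int g rho al be = (K (polar rho be) - K (polar rho al))%C.
Proof.
intros Hab H. unfold arc_int. apply CInt_unique.
apply (CInt_FTC (fun t => K (polar rho t))); auto.
- intros x Hx. unfold arc_fn. apply Rderive_comp. apply H; auto. apply Rderive_polar_t.
- intros x Hx. apply Rcont_continuous, Rcont_arc_fn. apply H; auto.
Qed.

Lemma rect_int_primitive K g a b al be : a <= b -> al <= be ->
  (forall r t, a <= r <= b -> al <= t <= be -> Cderive K (polar r t) (g (polar r t)) /\ Ccont g (polar r t)) ->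
  rect_int g a b al be = 0%C.
Proof.
intros Hab Hal H. unfold rect_int.
rewrite (radial_int_primitive K g al a b), (radial_int_primitive K g be a b),
  (arc_int_primitive K g a al be), (arc_int_primitive K g b al be); auto.
ring.
all: intros; apply H; lra.
Qed.

Lemma Ccont_minus f g z : Ccont f z -> Ccont g z -> Ccont (fun w => f w - g w)%C z.
Proof.
intros H1 H2 eps Heps.
destruct (H1 (eps/2)) as [d1 [Hd1 K1]]. lra.
destruct (H2 (eps/2)) as [d2 [Hd2 K2]]. lra.
exists (Rmin d1 d2). split. apply Rmin_pos; auto.
intros w Hw.
assert (Y1 : Cmod (w - z) < d1) by (eapply Rlt_le_trans; [exact Hw | apply Rmin_l]).
assert (Y2 : Cmod (w - z) < d2) by (eapply Rlt_le_trans; [exact Hw | apply Rmin_r]).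
specialize (K1 w Y1). specialize (K2 w Y2).
replace (f w - g w - (f z - g z))%C with ((f w - f z) + - (g w - g z))%C by ring.
eapply Rle_lt_trans. apply Cmod_triangle. rewrite Cmod_opp. lra.
Qed.

Lemma edges_cont_minus G1 G2 a b al be : edges_cont G1 a b al be -> edges_cont G2 a b al be ->
  edges_cont (fun w => G1 w - G2 w)%C a b al be.
Proof.
intros [A1 A2] [B1 B2]. split.
intros r Hr. destruct (A1 r Hr), (B1 r Hr). split; apply Ccont_minus; auto.
intros t Ht. destruct (A2 t Ht), (B2 t Ht). split; apply Ccont_minus; auto.
Qed.

Lemma rect_int_minus G1 G2 a b al be : a <= b -> al <= be -> edges_cont G1 a b al be -> edges_cont G2 a b al be ->
  rect_int (fun w => G1 w - G2 w)%C a b al be = (rect_int G1 a b al be - rect_int G2 a b al be)%C.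
Proof.
intros Hab Hal [A1 A2] [B1 B2].
assert (Rr : forall th, (forall r, a <= r <= b -> Ccont G1 (polar r th) /\ Ccont G2 (polar r th)) ->
   radial_int (fun w => G1 w - G2 w)%C th a b = (radial_int G1 th a b - radial_int G2 th a b)%C).
{ intros th Hth. unfold radial_int. apply CInt_unique.
  apply is_CInt_ext with (fun x => radial_fn G1 th x - radial_fn G2 th x)%C.
  intros x _. unfold radial_fn. ring.
  apply is_CInt_minus; apply CInt_correct; apply ex_radial_int; auto; intros; apply Hth; auto. }
assert (Ra : forall rho, (forall t, al <= t <= be -> Ccont G1 (polar rho t) /\ Ccont G2 (polar rho t)) ->
   arc_int (fun w => G1 w - G2 w)%C rho al be = (arc_int G1 rho al be - arc_int G2 rho al be)%C).
{ intros rho Hth. unfold arc_int. apply CInt_unique.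
  apply is_CInt_ext with (fun x => arc_fn G1 rho x - arc_fn G2 rho x)%C.
  intros x _. unfold arc_fn. ring.
  apply is_CInt_minus; apply CInt_correct; apply ex_arc_int; auto; intros; apply Hth; auto. }
unfold rect_int. rewrite !Rr, !Ra. ring.
all: intros x Hx; first [destruct (A1 x Hx), (B1 x Hx) | destruct (A2 x Hx), (B2 x Hx)]; auto.
Qed.

Lemma Cderive_affine (c L p : C) w : Cderive (fun w => c + L * (w - p))%C w L.
Proof.
apply Cderive_eps. intros eps Heps. exists 1. split. lra. intros w' _.
replace (c + L * (w' - p) - (c + L * (w - p)) - L * (w' - w))%C with (RtoC 0) by ring.
rewrite Cmod_0. pose proof (Cmod_ge_0 (w' - w)). nra.
Qed.

Lemma Cderive_affine_primitive (c L p : C) w :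
  Cderive (fun w => c * w + L * ((w - p) * (w - p)) / 2)%C w (c + L * (w - p))%C.
Proof.
apply Cderive_eps. intros eps Heps.
set (M := Cmod L + 1). assert (HM : 0 < M) by (pose proof (Cmod_ge_0 L); unfold M; lra).
exists (2 * eps / M). split. apply Rdiv_lt_0_compat; lra.
intros w' Hw'.
replace (c * w' + L * ((w' - p) * (w' - p)) / 2 - (c * w + L * ((w - p) * (w - p)) / 2) -
   (c + L * (w - p)) * (w' - w))%C with (L * (w' - w) * (w' - w) / 2)%C.
2:{ field. }
rewrite Cmod_div. 2:{ intro E. injection E. lra. }
rewrite !Cmod_mult.
replace (Cmod 2) with 2. 2:{ unfold Cmod; simpl. replace (2 * (2 * 1) + 0 * (0 * 1)) with (2 * 2) by ring.
  rewrite sqrt_square; lra. }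
pose proof (Cmod_ge_0 (w' - w)).
apply Rle_trans with (M * Cmod (w' - w) * Cmod (w' - w) / 2).
unfold Rdiv. apply Rmult_le_compat_r. lra. apply Rmult_le_compat_r. auto. apply Rmult_le_compat_r. auto. unfold M; lra.
apply Rle_trans with (M * (2 * eps / M) * Cmod (w' - w) / 2).
unfold Rdiv. apply Rmult_le_compat_r. lra. apply Rmult_le_compat_r. auto. apply Rmult_le_compat_l. lra. lra.
right. field. lra.
Qed.

Lemma rect_int_affine (c L p : C) a b al be : a <= b -> al <= be -> rect_int (fun w => c + L * (w - p))%C a b al be = 0%C.
Proof.
intros Hab Hal. apply (rect_int_primitive (fun w => c * w + L * ((w - p) * (w - p)) / 2)%C); auto.
intros r t _ _. split. apply Cderive_affine_primitive. apply (Cderive_Ccont _ _ L). apply Cderive_affine.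
Qed.

Lemma exists_small (W d : R) : 0 < d -> exists n : nat, W / 2 ^ n < d.
Proof.
intros Hd. pose proof (Rabs_pos W).
destruct (pow_lt_1_zero (/ 2) ltac:(rewrite Rabs_pos_eq; lra) (d / (Rabs W + 1)))
  as [n Hn]; [apply Rdiv_lt_0_compat; lra|].
exists n. specialize (Hn n (Nat.le_refl n)).
assert (Hp : 0 < / 2 ^ n) by (apply Rinv_0_lt_compat, pow_lt; lra).
rewrite Rabs_pos_eq, pow_inv in Hn by (apply pow_le; lra).
apply (Rmult_lt_compat_l (Rabs W + 1)) in Hn; [|lra].
replace ((Rabs W + 1) * (d / (Rabs W + 1))) with d in Hn by (field; lra).
unfold Rdiv. pose proof (RRle_abs W). nra.
Qed.

(* Goursat's lemma for polar rectangles, by repeated quadrisection: if the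
   boundary integral exceeded c times the area, so would that of one of the
   four quarters, and hence of a nested sequence of rectangles shrinking to a
   point p; but near p, G is affine up to o(|w - p|), which makes the boundary
   integral o(area). *)
Record rect := mkrect { ra : R; rb : R; ta : R; tb : R }.

Section Goursat.
Variable G : C -> C.
Variables a b al be : R.
Hypothesis Ha : 0 < a.
Hypothesis Hab : a < b.
Hypothesis Hal : al < be.
Hypothesis HG : forall r t, a <= r <= b -> al <= t <= be -> holo G (polar r t).

Definition inside (Q : rect) :=
  a <= ra Q /\ ra Q <= rb Q /\ rb Q <= b /\ al <= ta Q /\ ta Q <= tb Q /\ tb Q <= be.

Lemma G_cont r t : a <= r <= b -> al <= t <= be -> Ccont G (polar r t).
Proof. intros H1 H2. apply holo_Ccont, HG; auto. Qed.

Lemma edges_cont_inside ra' rb' ta' tb' : inside (mkrect ra' rb' ta' tb') -> edges_cont G ra' rb' ta' tb'.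
Proof.
intros [H1 [H2 [H3 [H4 [H5 H6]]]]]; simpl in *. split.
intros r Hr. split; apply G_cont; lra.
intros t Ht. split; apply G_cont; lra.
Qed.

Definition qint (Q : rect) := rect_int G (ra Q) (rb Q) (ta Q) (tb Q).
Definition area (Q : rect) := (rb Q - ra Q) * (tb Q - ta Q).
Definition mr Q := (ra Q + rb Q) / 2.
Definition mt Q := (ta Q + tb Q) / 2.
Definition q1 Q := mkrect (ra Q) (mr Q) (ta Q) (mt Q).
Definition q2 Q := mkrect (mr Q) (rb Q) (ta Q) (mt Q).
Definition q3 Q := mkrect (ra Q) (mr Q) (mt Q) (tb Q).
Definition q4 Q := mkrect (mr Q) (rb Q) (mt Q) (tb Q).

Lemma qint_split Q : inside Q -> qint Q = (qint (q1 Q) + qint (q2 Q) + qint (q3 Q) + qint (q4 Q))%C.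
Proof.
intros HQ. destruct Q as [r1 r2 t1 t2]. unfold qint, q1, q2, q3, q4, mr, mt; simpl.
destruct HQ as [H1 [H2 [H3 [H4 [H5 H6]]]]]; simpl in *.
rewrite (rect_int_split_r G r1 ((r1 + r2) / 2) r2 t1 t2); try lra.
rewrite (rect_int_split_t G r1 ((r1 + r2) / 2) t1 ((t1 + t2) / 2) t2); try lra.
rewrite (rect_int_split_t G ((r1 + r2) / 2) r2 t1 ((t1 + t2) / 2) t2); try lra.
ring.
all: apply edges_cont_inside; repeat split; simpl; lra.
Qed.

Lemma qint_affine_approx Q p L e : inside Q ->
  (forall r t, ra Q <= r <= rb Q -> ta Q <= t <= tb Q ->
     Cmod (G (polar r t) - (G p + L * (polar r t - p))) <= e) ->
  Cmod (qint Q) <= (2 * (rb Q - ra Q) + (ra Q + rb Q) * (tb Q - ta Q)) * e.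
Proof.
intros HQ Happ. set (A := fun w => (G p + L * (w - p))%C).
pose proof HQ as [Z1 [Z2 [Z3 [Z4 [Z5 Z6]]]]].
assert (ECG : edges_cont G (ra Q) (rb Q) (ta Q) (tb Q))
  by (apply edges_cont_inside; destruct Q; exact HQ).
assert (ECA : edges_cont A (ra Q) (rb Q) (ta Q) (tb Q))
  by (split; intros; split; apply (Cderive_Ccont _ _ L); apply Cderive_affine).
assert (HSI : qint Q = rect_int (fun w => G w - A w)%C (ra Q) (rb Q) (ta Q) (tb Q)).
{ rewrite rect_int_minus by (auto; lra). unfold A. rewrite rect_int_affine by lra. unfold qint. ring. }
rewrite HSI. apply rect_int_bound; try lra. apply edges_cont_minus; auto.
all: intros x Hx; split; apply Happ; lra.
Qed.

Lemma inside_close Q rs ts r t : inside Q ->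
  ra Q <= rs <= rb Q -> ta Q <= ts <= tb Q -> ra Q <= r <= rb Q -> ta Q <= t <= tb Q ->
  Cmod (polar r t - polar rs ts) <= (rb Q - ra Q) + b * (tb Q - ta Q).
Proof.
intros [Z1 [Z2 [Z3 [Z4 [Z5 Z6]]]]] Hrs Hts Hr Ht.
eapply Rle_trans. apply polar_lipschitz. rewrite (Rabs_pos_eq rs) by lra.
assert (Rabs (r - rs) <= rb Q - ra Q) by (apply Rabs_le; lra).
assert (Rabs (t - ts) <= tb Q - ta Q) by (apply Rabs_le; lra).
apply Rplus_le_compat; auto. apply Rmult_le_compat; try lra. apply Rabs_pos.
Qed.

Variable c : R.

Definition sel (Q : rect) : rect :=
  if Rlt_dec (c * area (q1 Q)) (Cmod (qint (q1 Q))) then q1 Q else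
  if Rlt_dec (c * area (q2 Q)) (Cmod (qint (q2 Q))) then q2 Q else
  if Rlt_dec (c * area (q3 Q)) (Cmod (qint (q3 Q))) then q3 Q else q4 Q.

Lemma sel_geom Q : inside Q ->
  inside (sel Q) /\ ra Q <= ra (sel Q) /\ rb (sel Q) <= rb Q /\ ta Q <= ta (sel Q) /\ tb (sel Q) <= tb Q /\
  rb (sel Q) - ra (sel Q) = (rb Q - ra Q) / 2 /\ tb (sel Q) - ta (sel Q) = (tb Q - ta Q) / 2.
Proof.
intros [H1 [H2 [H3 [H4 [H5 H6]]]]]. unfold sel.
repeat (destruct Rlt_dec); unfold q1, q2, q3, q4, mr, mt, inside; simpl; repeat split; lra.
Qed.

(* If all four quarters satisfied the bound, so would Q (triangle inequality). *)
Lemma sel_bad Q : inside Q -> c * area Q < Cmod (qint Q) -> c * area (sel Q) < Cmod (qint (sel Q)).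
Proof.
intros HQ Hbad. unfold sel.
destruct Rlt_dec as [h1|h1]; auto.
destruct Rlt_dec as [h2|h2]; auto.
destruct Rlt_dec as [h3|h3]; auto.
apply Rnot_lt_le in h1. apply Rnot_lt_le in h2. apply Rnot_lt_le in h3.
apply Rnot_le_lt. intro h4.
rewrite (qint_split Q HQ) in Hbad.
assert (Ea : area (q1 Q) + area (q2 Q) + area (q3 Q) + area (q4 Q) = area Q).
{ unfold area, q1, q2, q3, q4, mr, mt; simpl. field. }
pose proof (Cmod_triangle (qint (q1 Q) + qint (q2 Q) + qint (q3 Q)) (qint (q4 Q))).
pose proof (Cmod_triangle (qint (q1 Q) + qint (q2 Q)) (qint (q3 Q))).
pose proof (Cmod_triangle (qint (q1 Q)) (qint (q2 Q))).
assert (c * area Q = c * area (q1 Q) + c * area (q2 Q) + c * area (q3 Q) + c * area (q4 Q))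
  by (rewrite <- Ea; ring).
lra.
Qed.

Fixpoint nested (n : nat) : rect :=
  match n with O => mkrect a b al be | S n => sel (nested n) end.

Lemma nested_props n :
  inside (nested n) /\ rb (nested n) - ra (nested n) = (b - a) / 2 ^ n /\
  tb (nested n) - ta (nested n) = (be - al) / 2 ^ n.
Proof.
induction n.
- simpl. unfold inside; simpl. repeat split; try lra; field.
- destruct IHn as [Hs [Hr Ht]]. simpl.
  destruct (sel_geom _ Hs) as [S1 [S2 [S3 [S4 [S5 [S6 S7]]]]]].
  split; auto. rewrite S6, S7, Hr, Ht. split; field; apply pow_nonzero; lra.
Qed.

Lemma nested_mono n m : (n <= m)%nat ->
  ra (nested n) <= ra (nested m) /\ rb (nested m) <= rb (nested n) /\
  ta (nested n) <= ta (nested m) /\ tb (nested m) <= tb (nested n).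
Proof.
intros Hnm. induction Hnm.
- lra.
- simpl. destruct (nested_props m) as [Hs _].
  destruct (sel_geom _ Hs) as [S1 [S2 [S3 [S4 [S5 _]]]]]. lra.
Qed.

Lemma nested_bad n : c * area (mkrect a b al be) < Cmod (qint (mkrect a b al be)) ->
  c * area (nested n) < Cmod (qint (nested n)).
Proof.
intros Hb. induction n; simpl; auto.
apply sel_bad; auto. apply nested_props.
Qed.

Lemma nested_point : exists rs ts, forall n,
  ra (nested n) <= rs <= rb (nested n) /\ ta (nested n) <= ts <= tb (nested n).
Proof.
assert (Hcross : forall n m, ra (nested n) <= rb (nested m) /\ ta (nested n) <= tb (nested m)).
{ intros n m. destruct (nested_mono n (max n m) (Nat.le_max_l n m)) as [A1 [_ [A3 _]]].
  destruct (nested_mono m (max n m) (Nat.le_max_r n m)) as [_ [B2 [_ B4]]].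
  destruct (nested_props (max n m)) as [[_ [S2 [_ [_ [S5 _]]]]] _]. lra. }
destruct (completeness (fun x => exists n, x = ra (nested n))) as [rs [Hrs1 Hrs2]].
{ exists b. intros x [n Hn]. subst. destruct (nested_props n) as [[_ [S2 [S3 _]]] _]. lra. }
{ exists a. exists 0%nat. reflexivity. }
destruct (completeness (fun x => exists n, x = ta (nested n))) as [ts [Hts1 Hts2]].
{ exists be. intros x [n Hn]. subst. destruct (nested_props n) as [[_ [_ [_ [_ [S5 S6]]]]] _]. lra. }
{ exists al. exists 0%nat. reflexivity. }
exists rs, ts. intros n. split; split.
- apply Hrs1. exists n; auto.
- apply Hrs2. intros x [m Hm]. subst. apply Hcross.
- apply Hts1. exists n; auto.
- apply Hts2. intros x [m Hm]. subst. apply Hcross.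
Qed.

Lemma goursat_c : 0 < c -> Cmod (rect_int G a b al be) <= c * ((b - a) * (be - al)).
Proof.
intros Hc. apply Rnot_lt_le. intro Hbad.
destruct nested_point as [rs [ts Hnest]].
assert (Hin : a <= rs <= b /\ al <= ts <= be) by (specialize (Hnest 0%nat); simpl in Hnest; lra).
set (p := polar rs ts).
destruct (HG rs ts (proj1 Hin) (proj2 Hin)) as [L HL].
assert (HL' := proj1 (Cderive_eps _ _ _) HL).
set (W := (b - a) + b * (be - al)).
assert (HW : 0 < W) by (unfold W; nra).
set (eta := c * (b - a) * (be - al) / (4 * (W * W))).
assert (Heta : 0 < eta) by (unfold eta; apply Rdiv_lt_0_compat; [repeat apply Rmult_lt_0_compat; lra | nra]).
destruct (HL' eta Heta) as [d [Hd Hd']]. fold p in Hd'.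
destruct (exists_small W d Hd) as [n Hn].
destruct (nested_props n) as [HsQ [Hdr Hdt]].
set (Q := nested n) in *. set (u := 2 ^ n) in *.
assert (Hu : 0 < u) by (apply pow_lt; lra).
(* Q has size W / u, so G is eta (W / u)-close to its tangent map on Q ... *)
assert (HWu : (rb Q - ra Q) + b * (tb Q - ta Q) = W / u) by (rewrite Hdr, Hdt; unfold W; field; lra).
assert (Happ : forall r t, ra Q <= r <= rb Q -> ta Q <= t <= tb Q ->
   Cmod (G (polar r t) - (G p + L * (polar r t - p))) <= eta * (W / u)).
{ intros r t Hr Ht.
  assert (Hcl : Cmod (polar r t - p) <= W / u)
    by (rewrite <- HWu; apply inside_close; auto; apply Hnest).
  replace (G (polar r t) - (G p + L * (polar r t - p)))%C
    with (G (polar r t) - G p - L * (polar r t - p))%C by ring.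
  eapply Rle_trans. apply Hd'; lra. apply Rmult_le_compat_l; lra. }
(* ... hence its boundary integral is at most c area(Q) / 2, a contradiction. *)
pose proof (qint_affine_approx Q p L _ HsQ Happ) as Hbound.
pose proof (nested_bad n ltac:(unfold qint, area; simpl; lra)) as HbadQ. fold Q in HbadQ.
destruct HsQ as [Z1 [Z2 [Z3 [Z4 [Z5 Z6]]]]].
assert (Hper : 2 * (rb Q - ra Q) + (ra Q + rb Q) * (tb Q - ta Q) <= 2 * (W / u)) by nra.
assert (Harea : area Q = (b - a) * (be - al) / (u * u)) by (unfold area; rewrite Hdr, Hdt; field; lra).
assert (Hfin : (2 * (W / u)) * (eta * (W / u)) = c * area Q / 2) by (rewrite Harea; unfold eta; field; lra).
assert (Hcarea : 0 < c * area Q)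
  by (rewrite Harea; apply Rmult_lt_0_compat; auto; apply Rdiv_lt_0_compat; nra).
assert (0 <= eta * (W / u)) by (apply Rmult_le_pos; [lra | apply Rlt_le, Rdiv_lt_0_compat; lra]).
assert (Cmod (qint Q) <= c * area Q / 2)
  by (rewrite <- Hfin; eapply Rle_trans; [exact Hbound | apply Rmult_le_compat_r; auto]).
lra.
Qed.

End Goursat.

Lemma goursat G a b al be : 0 < a -> a < b -> al < be ->
  (forall r t, a <= r <= b -> al <= t <= be -> holo G (polar r t)) ->
  rect_int G a b al be = 0%C.
Proof.
intros Ha Hab Hal HG.
assert (Hpos : 0 < (b - a) * (be - al)) by nra.
apply Cmod_eq_0. apply Rle_antisym. 2: apply Cmod_ge_0.
apply Rnot_lt_le. intro H.
set (c0 := Cmod (rect_int G a b al be) / (2 * ((b - a) * (be - al)))).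
assert (Hc : 0 < c0) by (unfold c0; apply Rdiv_lt_0_compat; lra).
pose proof (goursat_c G a b al be Ha Hab Hal HG c0 Hc).
assert (c0 * ((b - a) * (be - al)) = Cmod (rect_int G a b al be) / 2) by (unfold c0; field; lra).
lra.
Qed.

Lemma C_zero_of_small (X : C) : (forall e, 0 < e -> Cmod X <= e) -> X = 0%C.
Proof.
intros H. apply Cmod_eq_0. apply Rle_antisym; [|apply Cmod_ge_0].
apply Rnot_lt_le. intro Hp. specialize (H (Cmod X / 2)). lra.
Qed.

(* Goursat's lemma with one exceptional point polar r0 t0 in the interior,
   near which G is merely bounded: cutting out a small square around it, the
   remaining pieces contribute nothing and the square contributes O(side). *)
Section GoursatPunctured.
Variable G : C -> C.
Variables a b al be r0 t0 : R.
Hypothesis Ha : 0 < a.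
Hypothesis Hr0 : a < r0 < b.
Hypothesis Ht0 : al < t0 < be.
Hypothesis HG : forall r t, a <= r <= b -> al <= t <= be -> (r <> r0 \/ t <> t0) ->
  holo G (polar r t).
Variables B delta : R.
Hypothesis Hdelta : 0 < delta.
Hypothesis HB : forall w, Cmod (w - polar r0 t0) < delta -> Cmod (G w) <= B.

Lemma edges_cont_avoiding a' b' al' be' :
  a <= a' -> a' <= b' -> b' <= b -> al <= al' -> al' <= be' -> be' <= be ->
  a' <> r0 -> b' <> r0 -> al' <> t0 -> be' <> t0 -> edges_cont G a' b' al' be'.
Proof.
intros. split.
- intros r Hr. split; apply holo_Ccont, HG; auto; lra.
- intros t Ht. split; apply holo_Ccont, HG; auto; lra.
Qed.

Lemma rect_int_avoiding a' b' al' be' :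
  a <= a' -> a' < b' -> b' <= b -> al <= al' -> al' < be' -> be' <= be ->
  (b' < r0 \/ r0 < a' \/ be' < t0 \/ t0 < al') -> rect_int G a' b' al' be' = 0%C.
Proof.
intros. apply goursat; try lra.
intros r t Hr Ht. apply HG; try lra.
Qed.

Lemma rect_int_square s : 0 < s -> s < r0 - a -> s < b - r0 -> s < t0 - al -> s < be - t0 ->
  rect_int G a b al be = rect_int G (r0 - s) (r0 + s) (t0 - s) (t0 + s).
Proof.
intros Hs H1 H2 H3 H4.
rewrite (rect_int_split_r G a (r0 - s) b al be); try lra.
2,3: apply edges_cont_avoiding; lra.
rewrite (rect_int_split_r G (r0 - s) (r0 + s) b al be); try lra.
2,3: apply edges_cont_avoiding; lra.
rewrite (rect_int_avoiding a (r0 - s) al be) by lra.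
rewrite (rect_int_avoiding (r0 + s) b al be) by lra.
rewrite (rect_int_split_t G (r0 - s) (r0 + s) al (t0 - s) be); try lra.
2,3: apply edges_cont_avoiding; lra.
rewrite (rect_int_split_t G (r0 - s) (r0 + s) (t0 - s) (t0 + s) be); try lra.
2,3: apply edges_cont_avoiding; lra.
rewrite (rect_int_avoiding (r0 - s) (r0 + s) al (t0 - s)) by lra.
rewrite (rect_int_avoiding (r0 - s) (r0 + s) (t0 + s) be) by lra.
ring.
Qed.

(* The small square lies in the disk where G is bounded by B. *)
Lemma rect_int_square_bound s : 0 < s -> s <= 1 -> s <= delta / (2 * (r0 + 1)) ->
  s < r0 - a -> s < b - r0 -> s < t0 - al -> s < be - t0 ->
  Cmod (rect_int G (r0 - s) (r0 + s) (t0 - s) (t0 + s)) <= 4 * (1 + r0) * (Rabs B + 1) * s.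
Proof.
intros Hs0 Hs1 Hsd H1 H2 H3 H4.
assert (Hclose : forall r t, r0 - s <= r <= r0 + s -> t0 - s <= t <= t0 + s ->
  Cmod (polar r t - polar r0 t0) < delta).
{ intros r t Hr Ht. eapply Rle_lt_trans. apply polar_lipschitz.
  rewrite (Rabs_pos_eq r0) by lra.
  assert (Rabs (r - r0) <= s) by (apply Rabs_le; lra).
  assert (Rabs (t - t0) <= s) by (apply Rabs_le; lra).
  apply Rle_lt_trans with ((r0 + 1) * s). nra.
  apply Rle_lt_trans with ((r0 + 1) * (delta / (2 * (r0 + 1)))).
  apply Rmult_le_compat_l; lra.
  replace ((r0 + 1) * (delta / (2 * (r0 + 1)))) with (delta / 2) by (field; lra). lra. }
assert (HB0 : 0 <= B).
{ eapply Rle_trans. apply (Cmod_ge_0 (G (polar r0 t0))). apply HB.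
  replace (polar r0 t0 - polar r0 t0)%C with (RtoC 0) by ring. rewrite Cmod_0. lra. }
eapply Rle_trans. apply rect_int_bound; try lra.
- apply edges_cont_avoiding; lra.
- intros r Hr; split; apply HB; apply Hclose; lra.
- intros t Ht; split; apply HB; apply Hclose; lra.
- rewrite Rabs_pos_eq by lra. nra.
Qed.

(* Closes goals  Rmin (... Rmin x y ...) <= x_i  by searching the Rmin tree. *)
Local Ltac Rmin_bound :=
  solve [ lra
        | eapply Rle_trans; [apply Rmin_l|]; Rmin_bound
        | eapply Rle_trans; [apply Rmin_r|]; Rmin_bound ].

Lemma goursat_punctured : rect_int G a b al be = 0%C.
Proof.
apply C_zero_of_small. intros e He.
set (K := 4 * (1 + r0) * (Rabs B + 1)).
assert (HK : 0 < K) by (unfold K; pose proof (Rabs_pos B); nra).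
set (s := Rmin (Rmin (Rmin ((r0 - a)/2) ((b - r0)/2)) (Rmin ((t0 - al)/2) ((be - t0)/2)))
           (Rmin (Rmin 1 (delta / (2 * (r0 + 1)))) (e / K))).
assert (Hs0 : 0 < s) by (unfold s; repeat apply Rmin_pos; try lra; apply Rdiv_lt_0_compat; lra).
assert (Hs : s <= (r0 - a)/2 /\ s <= (b - r0)/2 /\ s <= (t0 - al)/2 /\ s <= (be - t0)/2 /\
             s <= 1 /\ s <= delta / (2 * (r0 + 1)) /\ s <= e / K).
{ unfold s. repeat split; Rmin_bound. }
rewrite (rect_int_square s) by lra.
eapply Rle_trans. apply rect_int_square_bound; lra. fold K.
apply Rle_trans with (K * (e / K)). apply Rmult_le_compat_l; lra. right. field. lra.
Qed.

End GoursatPunctured.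

Definition circle_int G rho := arc_int G rho (-PI) PI.

Lemma polar_mPI r : polar r (-PI) = polar r PI.
Proof. unfold polar. rewrite cos_neg, sin_neg, sin_PI. f_equal. ring. Qed.

Lemma cis_mPI : cis (-PI) = cis PI.
Proof. unfold cis. rewrite cos_neg, sin_neg, sin_PI. f_equal. ring. Qed.

(* For the polar rectangle [a, b] x [-PI, PI] the two radial edges coincide,
   so its boundary integral is the difference of two circle integrals. *)
Lemma rect_int_circle G a b : rect_int G a b (-PI) PI = 0%C -> circle_int G a = circle_int G b.
Proof.
intros H. unfold rect_int in H. unfold circle_int.
assert (E : radial_int G (-PI) a b = radial_int G PI a b).
{ unfold radial_int, CInt. apply (RInt_ext (V:=C_R_CompleteNormedModule)).
  intros x _. unfold radial_fn. rewrite polar_mPI, cis_mPI. reflexivity. }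
rewrite E in H.
replace (arc_int G b (-PI) PI) with (arc_int G a (-PI) PI +
  (radial_int G PI a b + arc_int G b (-PI) PI - radial_int G PI a b - arc_int G a (-PI) PI))%C by ring.
rewrite H. ring.
Qed.

Lemma circle_int_annulus G a b : 0 < a -> a < b ->
  (forall w, a <= Cmod w <= b -> holo G w) ->
  circle_int G a = circle_int G b.
Proof.
intros Ha Hab H. apply rect_int_circle. apply goursat; try lra. pose proof PI_RGT_0; lra.
intros r t Hr Ht. apply H. rewrite Cmod_polar; lra.
Qed.

Lemma polar_real r t k : 0 < r -> -PI <= t <= PI -> 0 < k -> polar r t = RtoC k -> r = k /\ t = 0.
Proof.
intros Hr Ht Hk E. unfold polar, RtoC in E. injection E as E1 E2.
assert (Hs : sin t = 0) by (apply (Rmult_eq_reg_l r); lra).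
assert (Hc : 0 < cos t) by (apply (Rmult_lt_reg_l r); lra).
destruct (sin_eq_0_0 t Hs) as [z Hz].
pose proof PI_RGT_0.
assert (Hz1 : (-1 <= z <= 1)%Z).
{ split; apply le_IZR; simpl.
  - apply (Rmult_le_reg_r PI); auto. lra.
  - apply (Rmult_le_reg_r PI); auto. lra. }
assert (z = 0 \/ z = 1 \/ z = -1)%Z as [Z|[Z|Z]] by lia; subst z; simpl in Hz.
- rewrite Rmult_0_l in Hz. subst t. rewrite cos_0 in E1. split; lra.
- rewrite Rmult_1_l in Hz. subst t. rewrite cos_PI in Hc. lra.
- replace (-1 * PI) with (- PI) in Hz by ring. subst t. rewrite cos_neg, cos_PI in Hc. lra.
Qed.

Lemma circle_int_annulus_punctured G a b k : 0 < a -> a < k < b ->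
  (forall w, a <= Cmod w <= b -> w <> RtoC k -> holo G w) ->
  (exists B delta, 0 < delta /\ forall w, Cmod (w - RtoC k) < delta -> Cmod (G w) <= B) ->
  circle_int G a = circle_int G b.
Proof.
intros Ha Hk H [B [delta [Hd HB]]]. pose proof PI_RGT_0. apply rect_int_circle.
apply (goursat_punctured G a b (-PI) PI k 0 Ha Hk) with B delta; auto; try lra.
- intros r t Hr Ht Hne. apply H. rewrite Cmod_polar; lra.
  intro E. apply polar_real in E; try lra.
- intros w Hw. apply HB. replace (polar k 0) with (RtoC k) in Hw. exact Hw.
  unfold polar, RtoC. rewrite cos_0, sin_0. f_equal; ring.
Qed.

Lemma ex_circle_int G rho : 0 < rho -> (forall t, -PI <= t <= PI -> Ccont G (polar rho t)) ->
  ex_CInt (arc_fn G rho) (-PI) PI.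
Proof. intros. apply ex_arc_int; auto. pose proof PI_RGT_0; lra. Qed.

Lemma circle_int_bound G rho M : 0 < rho ->
  (forall t, -PI <= t <= PI -> Ccont G (polar rho t) /\ Cmod (G (polar rho t)) <= M) ->
  Cmod (circle_int G rho) <= 2 * PI * (rho * M).
Proof.
intros Hr H. pose proof PI_RGT_0. unfold circle_int, arc_int.
replace (2 * PI * (rho * M)) with ((PI - - PI) * (rho * M)) by ring.
apply CInt_bound. lra. apply ex_circle_int; auto. intros; apply H; auto.
intros x Hx. unfold arc_fn. rewrite Cmod_mult, Cmod_Ci_polar by lra. rewrite Rmult_comm.
apply Rmult_le_compat_l. lra. apply H. auto.
Qed.

Lemma circle_int_plus G1 G2 rho : 0 < rho ->
  (forall t, -PI <= t <= PI -> Ccont G1 (polar rho t) /\ Ccont G2 (polar rho t)) ->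
  circle_int (fun w => G1 w + G2 w)%C rho = (circle_int G1 rho + circle_int G2 rho)%C.
Proof.
intros Hr H. unfold circle_int, arc_int. apply CInt_unique.
apply is_CInt_ext with (fun x => arc_fn G1 rho x + arc_fn G2 rho x)%C.
intros. unfold arc_fn. ring.
apply is_CInt_plus; apply CInt_correct; apply ex_circle_int; auto; intros; apply H; auto.
Qed.

Lemma circle_int_scal (c : C) G rho : 0 < rho -> (forall t, -PI <= t <= PI -> Ccont G (polar rho t)) ->
  circle_int (fun w => c * G w)%C rho = (c * circle_int G rho)%C.
Proof.
intros Hr H. unfold circle_int, arc_int. apply CInt_unique.
apply is_CInt_ext with (fun x => c * arc_fn G rho x)%C.
intros. unfold arc_fn. ring.
apply is_CInt_mult_l; apply CInt_correct; apply ex_circle_int; auto.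
Qed.

(* G(w) = o(1/|w|) as w -> 0: the integrals of G over small circles tend to
   0.  This is how the isolated singularity at 0 is handled. *)
Definition o_inv_at_0 (G : C -> C) := forall eta, 0 < eta -> exists delta, 0 < delta /\
  forall w, 0 < Cmod w < delta -> Cmod w * Cmod (G w) <= eta.

Lemma circle_int_small G s : 0 < s -> (forall w, 0 < Cmod w <= s -> Ccont G w) -> o_inv_at_0 G ->
  forall e, 0 < e -> exists rho, 0 < rho < s /\ Cmod (circle_int G rho) <= e.
Proof.
intros Hs Hc HN e He. pose proof PI_RGT_0 as Hpi.
destruct (HN (e / (2 * PI))) as [d [Hd H]]; [apply Rdiv_lt_0_compat; lra|].
set (rho := Rmin (d / 2) (s / 2)).
assert (Hr : 0 < rho) by (unfold rho; apply Rmin_pos; lra).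
assert (Hr1 : rho < d) by (unfold rho; eapply Rle_lt_trans; [apply Rmin_l| lra]).
assert (Hr2 : rho < s) by (unfold rho; eapply Rle_lt_trans; [apply Rmin_r| lra]).
exists rho. split; [lra|].
replace e with (2 * PI * (rho * (e / (2 * PI) / rho))) by (field; lra).
apply circle_int_bound; auto. intros t Ht. split. apply Hc. rewrite Cmod_polar; lra.
specialize (H (polar rho t)). rewrite Cmod_polar in H by lra.
apply (Rmult_le_reg_l rho); auto. replace (rho * (e / (2 * PI) / rho)) with (e / (2 * PI)) by (field; lra).
apply H. lra.
Qed.

Lemma circle_int_zero G s : 0 < s -> (forall w, 0 < Cmod w <= s -> holo G w) -> o_inv_at_0 G ->
  circle_int G s = 0%C.
Proof.
intros Hs H HN. apply C_zero_of_small. intros e He.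
destruct (circle_int_small G s Hs (fun w Hw => holo_Ccont _ _ (H w Hw)) HN e He) as [rho [Hr Hb]].
rewrite <- (circle_int_annulus G rho s); try lra. auto.
intros w Hw. apply H. lra.
Qed.

Lemma circle_int_zero_punctured G s k : 0 < k < s ->
  (forall w, 0 < Cmod w <= s -> w <> RtoC k -> holo G w) -> o_inv_at_0 G ->
  (exists B delta, 0 < delta /\ forall w, Cmod (w - RtoC k) < delta -> Cmod (G w) <= B) ->
  circle_int G s = 0%C.
Proof.
intros Hs H HN HB. apply C_zero_of_small. intros e He.
assert (Hc : forall w, 0 < Cmod w <= k / 2 -> Ccont G w).
{ intros w Hw. apply holo_Ccont. apply H. lra. intro E. subst. rewrite Cmod_R, Rabs_pos_eq in Hw; lra. }
destruct (circle_int_small G (k / 2) ltac:(lra) Hc HN e He) as [rho [Hr Hb]].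
rewrite <- (circle_int_annulus_punctured G rho s k); try lra. auto.
intros w Hw Hne. apply H; auto. lra. exact HB.
Qed.

Lemma circle_int_ext G1 G2 s : (forall t, -PI <= t <= PI -> G1 (polar s t) = G2 (polar s t)) ->
  circle_int G1 s = circle_int G2 s.
Proof.
intros H. pose proof PI_RGT_0. unfold circle_int, arc_int, CInt. apply (RInt_ext (V:=C_R_CompleteNormedModule)).
intros x Hx. rewrite Rmin_left, Rmax_right in Hx by lra. unfold arc_fn. rewrite H by lra. reflexivity.
Qed.

Lemma polar_neq_0 s t : 0 < s -> polar s t <> 0%C.
Proof. intros Hs E. apply (f_equal Cmod) in E. rewrite Cmod_polar, Cmod_0 in E; lra. Qed.

Lemma Cmod_sub_ge (w z : C) : Cmod w - Cmod z <= Cmod (w - z).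
Proof. pose proof (Cmod_triangle (w - z) z). replace (w - z + z)%C with w in H by ring. lra. Qed.

Lemma neq_k (w : C) (k : R) : w <> RtoC k -> (w - RtoC k)%C <> 0%C.
Proof. intros H E. apply H. replace w with ((w - RtoC k) + RtoC k)%C by ring. rewrite E. ring. Qed.

(* The winding number of a circle around a point inside it is one:
   first around its center, ... *)
Lemma circle_int_inv s : 0 < s -> circle_int (fun w => / w)%C s = (RtoC (2 * PI) * Ci)%C.
Proof.
intros Hs. pose proof PI_RGT_0. unfold circle_int, arc_int. apply CInt_unique.
apply is_CInt_ext with (fun _ => Ci).
{ intros x _. unfold arc_fn. field. apply polar_neq_0; auto. }
pose proof (is_RInt_const (V:=C_R_NormedModule) (-PI) PI Ci) as H0.
unfold is_CInt. rewrite scal_C_R in H0. replace (PI - - PI) with (2 * PI) in H0 by ring. exact H0.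
Qed.

(* ... then around k, since 1/(w - k) - 1/w = k / (w (w - k)) is holomorphic
   outside the circle of radius k and O(1/|w|^2), so that its circle integrals
   vanish (move the circle to infinity). *)
Lemma circle_int_winding_correction k s : 0 < k < s ->
  circle_int (fun w => RtoC k / (w * (w - RtoC k)))%C s = 0%C.
Proof.
intros Hk. pose proof PI_RGT_0.
set (H2 := fun w => (RtoC k / (w * (w - RtoC k)))%C).
assert (Hne : forall w, k < Cmod w -> w <> 0%C /\ (w - RtoC k)%C <> 0%C).
{ intros w Hw. split.
  - intro E. subst. rewrite Cmod_0 in Hw. lra.
  - apply neq_k. intro E. subst. rewrite Cmod_R, Rabs_pos_eq in Hw; lra. }
assert (Hhol : forall w, k < Cmod w -> holo H2 w).
{ intros w Hw. destruct (Hne w Hw). unfold H2. apply holo_div. apply holo_const.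
  apply holo_mult. apply holo_id. apply holo_minus. apply holo_id. apply holo_const.
  apply Cmult_neq_0; auto. }
apply C_zero_of_small. intros e He.
set (eta := e / (2 * PI)). assert (Heta : 0 < eta) by (unfold eta; apply Rdiv_lt_0_compat; lra).
set (R0 := s + k / eta).
assert (HR0 : s < R0) by (unfold R0; assert (0 < k / eta) by (apply Rdiv_lt_0_compat; lra); lra).
rewrite (circle_int_annulus H2 s R0); try lra.
2: { intros w Hw. apply Hhol. lra. }
assert (HRk : 0 < R0 - k) by lra.
apply Rle_trans with (2 * PI * (R0 * (k / (R0 * (R0 - k))))).
2:{ replace e with (2 * PI * eta) by (unfold eta; field; lra).
    apply Rmult_le_compat_l. lra. replace (R0 * (k / (R0 * (R0 - k)))) with (k / (R0 - k)) by (field; lra).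
    apply (Rmult_le_reg_r (R0 - k)); auto. replace (k / (R0 - k) * (R0 - k)) with k by (field; lra).
    unfold R0. replace (eta * (s + k / eta - k)) with (eta * (s - k) + k) by (field; lra). nra. }
apply circle_int_bound. lra. intros t Ht. split.
- apply holo_Ccont, Hhol. rewrite Cmod_polar; lra.
- unfold H2. destruct (Hne (polar R0 t)) as [N1 N2]. rewrite Cmod_polar; lra.
  rewrite Cmod_div by (apply Cmult_neq_0; auto). rewrite Cmod_mult, Cmod_R, Rabs_pos_eq by lra.
  rewrite Cmod_polar by lra.
  assert (R0 - k <= Cmod (polar R0 t - RtoC k)).
  { pose proof (Cmod_sub_ge (polar R0 t) (RtoC k)). rewrite Cmod_polar, Cmod_R, Rabs_pos_eq in H0; lra. }
  unfold Rdiv. apply Rmult_le_compat_l. lra.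
  apply Rinv_le_contravar. apply Rmult_lt_0_compat; lra. apply Rmult_le_compat_l; lra.
Qed.

Lemma circle_int_winding k s : 0 < k < s ->
  circle_int (fun w => / (w - RtoC k))%C s = (RtoC (2 * PI) * Ci)%C.
Proof.
intros Hk. pose proof PI_RGT_0.
assert (Hne : forall t, polar s t <> 0%C /\ (polar s t - RtoC k)%C <> 0%C).
{ intros t. split. apply polar_neq_0; lra.
  apply neq_k. intro E. apply (f_equal Cmod) in E. rewrite Cmod_polar, Cmod_R, Rabs_pos_eq in E; lra. }
rewrite (circle_int_ext _ (fun w => / w + RtoC k / (w * (w - RtoC k)))%C).
- assert (Hc : forall t, -PI <= t <= PI -> Ccont (fun w => / w)%C (polar s t) /\
                 Ccont (fun w => RtoC k / (w * (w - RtoC k)))%C (polar s t)).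
  { intros t _. destruct (Hne t) as [N1 N2]. split; apply holo_Ccont.
    - apply (holo_inv (fun w => w)); [apply holo_id | exact N1].
    - apply holo_div. apply holo_const. apply holo_mult. apply holo_id.
      apply holo_minus. apply holo_id. apply holo_const. apply Cmult_neq_0; auto. }
  rewrite circle_int_plus by (lra || exact Hc).
  rewrite circle_int_winding_correction, circle_int_inv by lra. ring.
- intros t _. destruct (Hne t). field. split; auto.
Qed.

(* The Poisson formula at a real point 0 < k < s:
     2 PI F(k) = int_{-PI}^{PI} F(s e^{it}) P_k(t) dt,
   with the positive kernel P_k(t) = (s^2 - k^2) / |s e^{it} - k|^2.
   It follows from Cauchy's formula  int F(w)/(w - k) dw = 2 PI i F(k)  and
   Cauchy's theorem for the reflected term  F(w) k / (s^2 - k w); on the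
   circle |w| = s the two integrands combine into F(w) P_k / (i w). *)
Definition poisson_kernel (k s t : R) := (s * s - k * k) / Cmod (polar s t - RtoC k) ^ 2.

(* On |w| = s (so w conj(w) = s^2), the algebraic identity behind the kernel. *)
Lemma poisson_id (w : C) (s k : R) : (w * Cconj w)%C = RtoC (s * s) -> w <> 0%C ->
  (w - RtoC k)%C <> 0%C -> (Cconj w - RtoC k)%C <> 0%C ->
  (w * (/ (w - RtoC k) + RtoC k / (RtoC (s * s) - RtoC k * w)))%C =
  RtoC ((s * s - k * k) / Cmod (w - RtoC k) ^ 2).
Proof.
intros Hw Hw0 H1 H2.
assert (Hc : Cconj (w - RtoC k) = (Cconj w - RtoC k)%C).
{ destruct w. unfold Cconj, RtoC, Cminus, Cplus, Copp; simpl. f_equal; ring. }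
assert (Hm : Cmod (w - RtoC k) ^ 2 <> 0).
{ apply pow_nonzero. intro E. apply H1. apply Cmod_eq_0. auto. }
rewrite (RtoC_div _ _ Hm), Cmod2_conj, Hc.
rewrite (RtoC_minus (s * s) (k * k)), (RtoC_mult k k).
rewrite <- Hw.
field. repeat split; auto.
replace (w * Cconj w - RtoC k * w)%C with (w * (Cconj w - RtoC k))%C by ring.
apply Cmult_neq_0; auto.
Qed.

Lemma Cmod_k_minus (w : C) (k : R) : 0 < k -> Cmod w < k -> k - Cmod w <= Cmod (w - RtoC k).
Proof.
intros Hk Hw. pose proof (Cmod_sub_ge (RtoC k) w). rewrite Cmod_R, Rabs_pos_eq in H by lra.
replace (RtoC k - w)%C with (- (w - RtoC k))%C in H by ring. rewrite Cmod_opp in H. lra.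
Qed.

Section Poisson.
Variable F : C -> C.
Variables k s : R.
Hypothesis Hks : 0 < k < s.
Hypothesis HF : forall w, 0 < Cmod w <= s -> holo F w.
Hypothesis HN : o_inv_at_0 F.

Definition diff_quotient w := ((F w - F (RtoC k)) / (w - RtoC k))%C.
Definition reflected w := (F w * (RtoC k / (RtoC (s * s) - RtoC k * w)))%C.

Lemma holo_diff_quotient w : 0 < Cmod w <= s -> w <> RtoC k -> holo diff_quotient w.
Proof.
intros Hw Hne. unfold diff_quotient. apply holo_div. apply holo_minus. apply HF; auto. apply holo_const.
apply holo_minus. apply holo_id. apply holo_const. apply neq_k; auto.
Qed.

Lemma reflected_den_ge w : Cmod w <= s -> s * s - k * s <= Cmod (RtoC (s * s) - RtoC k * w).
Proof.
intros Hw. pose proof (Cmod_sub_ge (RtoC (s * s)) (RtoC k * w)).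
rewrite Cmod_R, Rabs_pos_eq in H by nra. rewrite Cmod_mult, Cmod_R, Rabs_pos_eq in H by lra.
pose proof (Cmod_ge_0 w). nra.
Qed.

Lemma reflected_den_neq_0 w : Cmod w <= s -> (RtoC (s * s) - RtoC k * w)%C <> 0%C.
Proof.
intros Hw E. pose proof (reflected_den_ge w Hw). rewrite E, Cmod_0 in H. nra.
Qed.

Lemma holo_reflected w : 0 < Cmod w <= s -> holo reflected w.
Proof.
intros Hw. unfold reflected. apply holo_mult. apply HF; auto. apply holo_div. apply holo_const.
apply holo_minus. apply holo_const. apply holo_mult. apply holo_const. apply holo_id.
apply reflected_den_neq_0. lra.
Qed.

Lemma diff_quotient_o_inv : o_inv_at_0 diff_quotient.
Proof.
intros eta Heta.
set (A := Cmod (F (RtoC k)) + 1). assert (HA : 0 < A) by (pose proof (Cmod_ge_0 (F (RtoC k))); unfold A; lra).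
destruct (HN (eta * k / 4)) as [d1 [Hd1 H1]]. apply Rdiv_lt_0_compat; nra.
exists (Rmin d1 (Rmin (k / 2) (eta * k / (4 * A)))). split.
{ repeat apply Rmin_pos; try lra. apply Rdiv_lt_0_compat; nra. }
intros w Hw.
assert (W1 : Cmod w < d1) by (eapply Rlt_le_trans; [apply Hw | apply Rmin_l]).
assert (W2 : Cmod w < k / 2)
  by (eapply Rlt_le_trans; [apply Hw | eapply Rle_trans; [apply Rmin_r | apply Rmin_l]]).
assert (W3 : Cmod w < eta * k / (4 * A))
  by (eapply Rlt_le_trans; [apply Hw | eapply Rle_trans; [apply Rmin_r | apply Rmin_r]]).
specialize (H1 w (conj (proj1 Hw) W1)).
assert (Hd : k / 2 <= Cmod (w - RtoC k)) by (pose proof (Cmod_k_minus w k); lra).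
unfold diff_quotient. rewrite Cmod_div. 2:{ intro E. rewrite E, Cmod_0 in Hd. lra. }
assert (Num : Cmod (F w - F (RtoC k)) <= Cmod (F w) + Cmod (F (RtoC k))).
{ unfold Cminus. eapply Rle_trans. apply Cmod_triangle. rewrite Cmod_opp. lra. }
pose proof (Cmod_ge_0 w). pose proof (Cmod_ge_0 (F w - F (RtoC k))).
apply Rle_trans with (Cmod w * (Cmod (F w - F (RtoC k)) / (k / 2))).
{ apply Rmult_le_compat_l; auto. unfold Rdiv. apply Rmult_le_compat_l; auto.
  apply Rinv_le_contravar; lra. }
apply Rle_trans with ((Cmod w * Cmod (F w) + Cmod w * A) * (2 / k)).
{ replace (Cmod w * (Cmod (F w - F (RtoC k)) / (k / 2)))
    with (Cmod w * Cmod (F w - F (RtoC k)) * (2 / k)) by (field; lra).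
  apply Rmult_le_compat_r. apply Rlt_le, Rdiv_lt_0_compat; lra. unfold A. nra. }
assert (Cmod w * A <= eta * k / 4).
{ apply Rle_trans with (eta * k / (4 * A) * A). apply Rmult_le_compat_r; lra. right. field. lra. }
apply Rle_trans with ((eta * k / 4 + eta * k / 4) * (2 / k)).
{ apply Rmult_le_compat_r. apply Rlt_le, Rdiv_lt_0_compat; lra. lra. }
right. field. lra.
Qed.

Lemma diff_quotient_bounded_near_k :
  exists B delta, 0 < delta /\ forall w, Cmod (w - RtoC k) < delta -> Cmod (diff_quotient w) <= B.
Proof.
assert (Hk : holo F (RtoC k)) by (apply HF; rewrite Cmod_R, Rabs_pos_eq; lra).
destruct Hk as [l Hl]. destruct (Cderive_local_lipschitz _ _ _ Hl) as [d [Hd H]].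
exists (Cmod l + 1), d. split; auto. intros w Hw.
destruct (Ceq_dec w (RtoC k)) as [E|E].
- subst. unfold diff_quotient. replace (F (RtoC k) - F (RtoC k))%C with (RtoC 0) by ring.
  unfold Cdiv. rewrite Cmult_0_l, Cmod_0. pose proof (Cmod_ge_0 l). lra.
- unfold diff_quotient. assert (Hne := neq_k _ _ E). rewrite Cmod_div by auto.
  assert (Hp : 0 < Cmod (w - RtoC k)) by (apply Cmod_gt_0; auto).
  apply (Rmult_le_reg_r (Cmod (w - RtoC k))); auto.
  replace (Cmod (F w - F (RtoC k)) / Cmod (w - RtoC k) * Cmod (w - RtoC k))
    with (Cmod (F w - F (RtoC k))) by (field; lra).
  apply H. exact Hw.
Qed.

Lemma circle_int_diff_quotient : circle_int diff_quotient s = 0%C.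
Proof.
apply (circle_int_zero_punctured diff_quotient s k); auto.
- intros w Hw Hne. apply holo_diff_quotient; auto.
- exact diff_quotient_o_inv.
- exact diff_quotient_bounded_near_k.
Qed.

(* The reflected term is holomorphic on the whole disk of radius s. *)
Lemma circle_int_reflected : circle_int reflected s = 0%C.
Proof.
apply (circle_int_zero reflected s). lra.
- intros w Hw. apply holo_reflected; auto.
- intros eta Heta.
  assert (Hq : 0 < s * s - k * s) by nra.
  destruct (HN (eta * (s * s - k * s) / k)) as [d1 [Hd1 H1]]. apply Rdiv_lt_0_compat; nra.
  exists (Rmin d1 s). split. apply Rmin_pos; lra.
  intros w Hw.
  assert (W1 : Cmod w < d1) by (eapply Rlt_le_trans; [apply Hw | apply Rmin_l]).
  assert (W2 : Cmod w < s) by (eapply Rlt_le_trans; [apply Hw | apply Rmin_r]).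
  specialize (H1 w (conj (proj1 Hw) W1)).
  unfold reflected. rewrite Cmod_mult, Cmod_div by (apply reflected_den_neq_0; lra).
  rewrite Cmod_R, Rabs_pos_eq by lra.
  pose proof (reflected_den_ge w ltac:(lra)).
  pose proof (Cmod_ge_0 w). pose proof (Cmod_ge_0 (F w)).
  apply Rle_trans with (Cmod w * Cmod (F w) * (k / (s * s - k * s))).
  { rewrite <- Rmult_assoc. apply Rmult_le_compat_l. nra.
    unfold Rdiv. apply Rmult_le_compat_l. lra. apply Rinv_le_contravar; lra. }
  apply Rle_trans with (eta * (s * s - k * s) / k * (k / (s * s - k * s))).
  { apply Rmult_le_compat_r. apply Rlt_le, Rdiv_lt_0_compat; lra. auto. }
  right. field. lra.
Qed.

Lemma polar_neq_k t : polar s t <> RtoC k.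
Proof. intro E. apply (f_equal Cmod) in E. rewrite Cmod_polar, Cmod_R, Rabs_pos_eq in E; lra. Qed.

Lemma holo_cauchy_kernel w : w <> RtoC k -> holo (fun w => / (w - RtoC k))%C w.
Proof.
intros Hne. apply (holo_inv (fun w => w - RtoC k)%C).
apply holo_minus. apply holo_id. apply holo_const. apply neq_k; auto.
Qed.

Lemma cauchy_formula_real_point :
  circle_int (fun w => F w / (w - RtoC k))%C s = (RtoC (2 * PI) * Ci * F (RtoC k))%C.
Proof.
rewrite (circle_int_ext _ (fun w => diff_quotient w + F (RtoC k) * / (w - RtoC k))%C).
2:{ intros t Ht. unfold diff_quotient. field. apply neq_k, polar_neq_k. }
rewrite circle_int_plus. 2: lra.
2:{ intros t Ht. split; apply holo_Ccont.
    - apply holo_diff_quotient. rewrite Cmod_polar; lra. apply polar_neq_k.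
    - apply holo_mult. apply holo_const. apply holo_cauchy_kernel, polar_neq_k. }
rewrite circle_int_diff_quotient, circle_int_scal. 2: lra.
2:{ intros t Ht. apply holo_Ccont, holo_cauchy_kernel, polar_neq_k. }
rewrite circle_int_winding by lra. ring.
Qed.

Definition poisson_integrand w := (F w / (w - RtoC k) + reflected w)%C.

Lemma holo_poisson_integrand t : holo poisson_integrand (polar s t).
Proof.
assert (Hw : 0 < Cmod (polar s t) <= s) by (rewrite Cmod_polar; lra).
unfold poisson_integrand. apply holo_plus.
- unfold Cdiv. apply holo_mult. apply HF; auto. apply holo_cauchy_kernel, polar_neq_k.
- apply holo_reflected; auto.
Qed.

Lemma circle_int_poisson_integrand :
  circle_int poisson_integrand s = (RtoC (2 * PI) * Ci * F (RtoC k))%C.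
Proof.
unfold poisson_integrand. rewrite circle_int_plus. 2: lra.
2:{ intros t Ht. split; apply holo_Ccont.
    - unfold Cdiv. apply holo_mult. apply HF. rewrite Cmod_polar; lra.
      apply holo_cauchy_kernel, polar_neq_k.
    - apply holo_reflected. rewrite Cmod_polar; lra. }
rewrite cauchy_formula_real_point, circle_int_reflected. ring.
Qed.

Lemma polar_conj t : (polar s t * Cconj (polar s t))%C = RtoC (s * s).
Proof.
unfold polar, Cconj, Cmult, RtoC; simpl. pose proof (sin2_cos2 t). unfold Rsqr in H. f_equal; nra.
Qed.

Lemma arc_fn_poisson_integrand t :
  arc_fn poisson_integrand s t = (Ci * (F (polar s t) * RtoC (poisson_kernel k s t)))%C.
Proof.
unfold arc_fn, poisson_integrand, reflected, poisson_kernel. set (w := polar s t).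
assert (Hw : (w * Cconj w)%C = RtoC (s * s)) by apply polar_conj.
assert (Hw0 : w <> 0%C) by (apply polar_neq_0; lra).
assert (H1 : (w - RtoC k)%C <> 0%C) by (apply neq_k, polar_neq_k).
assert (H2 : (Cconj w - RtoC k)%C <> 0%C).
{ apply neq_k. intro E. apply (f_equal Cmod) in E. rewrite Cmod_conj in E. unfold w in E.
  rewrite Cmod_polar, Cmod_R, Rabs_pos_eq in E; lra. }
rewrite <- (poisson_id w s k Hw Hw0 H1 H2).
field. split; auto. apply reflected_den_neq_0; auto. unfold w. rewrite Cmod_polar; lra.
Qed.

Lemma Ci_Ci : (Ci * Ci)%C = RtoC (-1).
Proof. unfold Ci, Cmult, RtoC; simpl. f_equal; ring. Qed.

Lemma poisson : is_CInt (fun t => F (polar s t) * RtoC (poisson_kernel k s t))%C (-PI) PI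
  (RtoC (2 * PI) * F (RtoC k))%C.
Proof.
apply is_CInt_ext with (fun t => - Ci * arc_fn poisson_integrand s t)%C.
{ intros x _. rewrite arc_fn_poisson_integrand.
  replace (- Ci * (Ci * (F (polar s x) * RtoC (poisson_kernel k s x))))%C
    with (- (Ci * Ci) * (F (polar s x) * RtoC (poisson_kernel k s x)))%C by ring.
  rewrite Ci_Ci. ring. }
replace (RtoC (2 * PI) * F (RtoC k))%C with (- Ci * circle_int poisson_integrand s)%C.
2:{ rewrite circle_int_poisson_integrand.
    replace (- Ci * (RtoC (2 * PI) * Ci * F (RtoC k)))%C
      with (- (Ci * Ci) * (RtoC (2 * PI) * F (RtoC k)))%C by ring.
    rewrite Ci_Ci. ring. }
apply is_CInt_mult_l. apply CInt_correct. apply ex_circle_int. lra.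
intros t Ht. apply holo_Ccont, holo_poisson_integrand.
Qed.

End Poisson.

Lemma poisson_kernel_nonneg k s t : 0 < k < s -> 0 <= poisson_kernel k s t.
Proof.
intros H. unfold poisson_kernel. apply Rmult_le_pos. nra. apply Rlt_le, Rinv_0_lt_compat.
apply pow_lt. apply Cmod_gt_0. apply neq_k. intro E. apply (f_equal Cmod) in E.
rewrite Cmod_polar, Cmod_R, Rabs_pos_eq in E; lra.
Qed.

Lemma o_inv_at_0_const (c : C) : o_inv_at_0 (fun _ => c).
Proof.
intros eta Heta. exists (eta / (Cmod c + 1)). split.
apply Rdiv_lt_0_compat. lra. pose proof (Cmod_ge_0 c); lra.
intros w Hw. pose proof (Cmod_ge_0 c).
apply Rle_trans with (eta / (Cmod c + 1) * (Cmod c + 1)).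
apply Rmult_le_compat; lra. right. field. lra.
Qed.

(* The Poisson formula for F = 1: the kernel has total mass 2 PI. *)
Lemma poisson_kernel_int k s : 0 < k < s -> is_RInt (poisson_kernel k s) (-PI) PI (2 * PI).
Proof.
intros Hks.
pose proof (poisson (fun _ => RtoC 1) k s Hks (fun w _ => holo_const _ w) (o_inv_at_0_const _)) as H.
apply (is_RInt_fct_extend_fst (U:=R_NormedModule) (V:=R_NormedModule)) in H.
simpl in H. replace (2 * PI * 1 - 0 * 0) with (2 * PI) in H by ring.
eapply is_RInt_ext. 2: exact H.
intros x _. simpl. ring.
Qed.

(* Maximum principle at k: |F(k)| is at most the sup of |F| on |w| = s, as
   F(k) is an average of these values against a positive kernel of mass one. *)
Lemma max_modulus_real_point F k s M : 0 < k < s -> (forall w, 0 < Cmod w <= s -> holo F w) ->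
  o_inv_at_0 F -> (forall t, -PI <= t <= PI -> Cmod (F (polar s t)) <= M) -> Cmod (F (RtoC k)) <= M.
Proof.
intros Hks HF HN HM. pose proof PI_RGT_0.
pose proof (poisson F k s Hks HF HN) as HP.
assert (Hc : Cmod (CInt (fun t => F (polar s t) * RtoC (poisson_kernel k s t))%C (-PI) PI) <= M * (2 * PI)).
{ apply CInt_bound_fun with (g := fun t => M * poisson_kernel k s t). lra.
  exists (RtoC (2 * PI) * F (RtoC k))%C. exact HP.
  apply (is_RInt_scal (V:=R_NormedModule) (poisson_kernel k s) (-PI) PI M). apply poisson_kernel_int; auto.
  intros x Hx. rewrite Cmod_mult, Cmod_R, Rabs_pos_eq by (apply poisson_kernel_nonneg; auto).
  apply Rmult_le_compat_r. apply poisson_kernel_nonneg; auto. apply HM; auto. }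
rewrite (CInt_unique _ _ _ _ HP) in Hc. rewrite Cmod_mult, Cmod_R, Rabs_pos_eq in Hc by lra.
apply (Rmult_le_reg_l (2 * PI)). lra. lra.
Qed.

Lemma le_of_le_div_sq (X c k : R) : 0 <= c -> 0 <= k < 1 ->
  (forall s, k < s < 1 -> X <= c / (s * s)) -> X <= c.
Proof.
intros Hc Hk H. apply Rnot_lt_le. intro Hlt.
assert (HX : 0 < X) by lra.
set (a := Rmax k (c / X)).
assert (Ha1 : a < 1).
{ unfold a. apply Rmax_lub_lt. lra. apply (Rmult_lt_reg_r X); auto.
  unfold Rdiv. rewrite Rmult_assoc, Rinv_l by lra. lra. }
assert (Hka : k <= a) by apply Rmax_l.
assert (Hcx : c / X <= a) by apply Rmax_r.
set (s := (1 + a) / 2).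
assert (Hs : k < s < 1) by (unfold s; lra).
assert (Hss : a < s * s) by (unfold s; nra).
specialize (H s Hs).
apply (Rmult_le_compat_r (s * s)) in H; [|nra].
replace (c / (s * s) * (s * s)) with c in H by (field; nra).
assert (c <= X * a).
{ apply (Rmult_le_reg_r (/ X)). apply Rinv_0_lt_compat; auto.
  replace (X * a * / X) with a by (field; lra). exact Hcx. }
nra.
Qed.

Section SecondOrderSchwarz.
Variable h : C -> C.
Variable eps : R.
Hypothesis Hhol : holomorphic_on_disk h.
Hypothesis Hmap : maps_disk_to_disk h.
Hypothesis H0 : h (RtoC 0) = RtoC eps.
Hypothesis Heps : 0 <= eps.
Variable b1 : C.
Hypothesis Hb1 : Cderive h (RtoC 0) b1.

Definition remainder (z : C) := (h z - RtoC eps - b1 * z)%C.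
Definition schwarz_const := 1 + eps + Cmod b1.

(* Along the direction u, |u| = 1, apply the maximum principle to the
   remainder divided by w^2; on the circle |w| = s it is at most
   schwarz_const / s^2 since |h| < 1. *)
Section Direction.
Variable u : C.
Hypothesis Hu : Cmod u = 1.

Definition rotated_quotient w := (remainder (u * w) / (w * w))%C.

Lemma holo_rotated_quotient w : 0 < Cmod w < 1 -> holo rotated_quotient w.
Proof.
intros Hw. unfold rotated_quotient, remainder. apply holo_div.
- apply holo_minus. apply holo_minus.
  + apply (holo_comp h (fun w => u * w)%C). apply Hhol. rewrite Cmod_mult, Hu. lra.
    apply holo_mult. apply holo_const. apply holo_id.
  + apply holo_const.
  + apply holo_mult. apply holo_const. apply holo_mult. apply holo_const. apply holo_id.
- apply holo_mult; apply holo_id.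
- apply Cmult_neq_0; intro X; rewrite X, Cmod_0 in Hw; lra.
Qed.

(* remainder(u w) = o(|w|), so rotated_quotient w = o(1/|w|). *)
Lemma rotated_quotient_o_inv : o_inv_at_0 rotated_quotient.
Proof.
intros eta Heta. destruct (proj1 (Cderive_eps _ _ _) Hb1 eta Heta) as [d [Hd Hd']].
exists d. split; auto. intros w Hw.
assert (Hw0 : w <> 0%C) by (intro X; rewrite X, Cmod_0 in Hw; lra).
specialize (Hd' (u * w)%C).
replace (u * w - RtoC 0)%C with (u * w)%C in Hd' by ring.
rewrite Cmod_mult, Hu, Rmult_1_l in Hd'. specialize (Hd' (proj2 Hw)).
unfold rotated_quotient. rewrite Cmod_div by (apply Cmult_neq_0; auto). rewrite Cmod_mult.
unfold remainder. rewrite H0 in Hd'.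
apply (Rmult_le_reg_r (Cmod w)). lra.
replace (Cmod w * (Cmod (h (u * w) - RtoC eps - b1 * (u * w)) / (Cmod w * Cmod w)) * Cmod w)
  with (Cmod (h (u * w) - RtoC eps - b1 * (u * w))) by (field; lra).
exact Hd'.
Qed.

Lemma rotated_quotient_circle_bound s t : 0 < s < 1 ->
  Cmod (rotated_quotient (polar s t)) <= schwarz_const / (s * s).
Proof.
intros Hs. unfold rotated_quotient. set (w := polar s t).
assert (Hw : Cmod w = s) by (unfold w; rewrite Cmod_polar; lra).
assert (Hw0 : w <> 0%C) by (intro X; rewrite X, Cmod_0 in Hw; lra).
rewrite Cmod_div by (apply Cmult_neq_0; auto). rewrite Cmod_mult, Hw.
unfold Rdiv. apply Rmult_le_compat_r. apply Rlt_le, Rinv_0_lt_compat. nra.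
unfold remainder, Cminus. eapply Rle_trans. apply Cmod_triangle. rewrite Cmod_opp.
eapply Rle_trans. apply Rplus_le_compat_r. apply Cmod_triangle.
rewrite Cmod_opp, Cmod_R, Rabs_pos_eq by lra.
rewrite !Cmod_mult, Hu, Hw.
assert (Cmod (h (u * w)) < 1) by (apply Hmap; rewrite Cmod_mult, Hu, Hw; lra).
pose proof (Cmod_ge_0 b1). unfold schwarz_const. nra.
Qed.

Lemma rotated_quotient_bound k : 0 < k < 1 -> Cmod (rotated_quotient (RtoC k)) <= schwarz_const.
Proof.
intros Hk. apply (le_of_le_div_sq _ _ k); [unfold schwarz_const; pose proof (Cmod_ge_0 b1); lra | lra |].
intros s Hs. apply (max_modulus_real_point rotated_quotient k s). lra.
- intros w Hw. apply holo_rotated_quotient. lra.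
- exact rotated_quotient_o_inv.
- intros t _. apply rotated_quotient_circle_bound. lra.
Qed.

End Direction.

Lemma remainder_bound z : Cmod z < 1 -> Cmod (remainder z) <= schwarz_const * (Cmod z * Cmod z).
Proof.
intros Hz.
destruct (Ceq_dec z 0) as [E|E].
{ subst. unfold remainder. rewrite H0. replace (RtoC eps - RtoC eps - b1 * 0)%C with (RtoC 0) by ring.
  rewrite Cmod_0. unfold schwarz_const. pose proof (Cmod_ge_0 b1). nra. }
set (kk := Cmod z).
assert (Hkk : 0 < kk) by (apply Cmod_gt_0; auto).
assert (Hkk0 : RtoC kk <> 0%C) by (intro X; injection X; lra).
set (u := (z / RtoC kk)%C).
assert (Hu : Cmod u = 1)
  by (unfold u; rewrite Cmod_div, Cmod_R, Rabs_pos_eq by (auto; lra); fold kk; field; lra).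
assert (Huz : (u * RtoC kk)%C = z) by (unfold u; field; auto).
pose proof (rotated_quotient_bound u Hu kk ltac:(split; [exact Hkk | exact Hz])) as Hq.
unfold rotated_quotient in Hq. rewrite Huz in Hq.
rewrite Cmod_div in Hq by (apply Cmult_neq_0; auto). rewrite Cmod_mult, Cmod_R, Rabs_pos_eq in Hq by lra.
apply (Rmult_le_reg_r (/ (kk * kk))). apply Rinv_0_lt_compat; nra.
replace (schwarz_const * (kk * kk) * / (kk * kk)) with schwarz_const by (field; lra). exact Hq.
Qed.

Definition ball_condition : Prop :=
  forall r : R, 0 < r < 1 -> forall z : C, Cmod z < r ->
    closed_ball (RtoC ((1 - r ^ 2) / 2)) ((1 + r ^ 2) / 2) (h z).

(* Taking r = 2 sigma: on the circle |z| = sigma, Re h(z) >= -4 sigma^2. *)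
Lemma re_h_lower_bound sg z : ball_condition -> 0 < 2 * sg < 1 -> Cmod z = sg ->
  - (4 * (sg * sg)) <= fst (h z).
Proof.
intros Hball Hr Hz. specialize (Hball (2 * sg) Hr z ltac:(lra)). unfold closed_ball in Hball.
pose proof (re_le_Cmod (h z - RtoC ((1 - (2 * sg) ^ 2) / 2))%C).
assert (Rabs (Re (h z - RtoC ((1 - (2 * sg) ^ 2) / 2))) <= (1 + (2 * sg) ^ 2) / 2) by lra.
apply Rabs_le_between in H1. unfold Re in H1. simpl in H1. simpl. nra.
Qed.

Lemma steepest_point sg : 0 < sg -> b1 <> 0%C ->
  exists z, Cmod z = sg /\ (b1 * z)%C = RtoC (- (sg * Cmod b1)).
Proof.
intros Hsg Hb. set (B := Cmod b1).
assert (HBp : 0 < B) by (apply Cmod_gt_0; auto).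
assert (HB' : RtoC B <> 0%C) by (intro X; injection X; lra).
exists (- RtoC sg * (Cconj b1 / RtoC B))%C. split.
- rewrite Cmod_mult, Cmod_opp, Cmod_R, Cmod_div, Cmod_conj, Cmod_R by auto.
  fold B. rewrite !Rabs_pos_eq by lra. field. lra.
- replace (b1 * (- RtoC sg * (Cconj b1 / RtoC B)))%C
    with (- RtoC sg * (b1 * Cconj b1) / RtoC B)%C by (field; auto).
  rewrite <- Cmod2_conj. fold B. replace (B ^ 2) with (B * B) by ring.
  rewrite RtoC_opp, !RtoC_mult. field. auto.
Qed.

(* Since h(z) = eps + b1 z + remainder(z) cannot have real part below
   -4 sigma^2 at the steepest point, |b1| is small when eps is. *)
Lemma derivative_bound sg : ball_condition -> 0 < sg <= 1/4 -> eps < 1 ->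
  Cmod b1 <= 2 * eps / sg + 12 * sg.
Proof.
intros Hball Hsg He1. set (B := Cmod b1). pose proof (Cmod_ge_0 b1) as HB0. fold B in HB0.
assert (HBb : B * (sg - sg * sg) <= eps + 5 * (sg * sg) + eps * (sg * sg)).
{ destruct (Ceq_dec b1 0) as [E|E].
  - unfold B. rewrite E, Cmod_0. nra.
  - destruct (steepest_point sg ltac:(lra) E) as [z [Hz Hbz]]. fold B in Hbz.
    assert (Hzf := remainder_bound z ltac:(lra)). rewrite Hz in Hzf.
    assert (Hrz := re_h_lower_bound sg z Hball ltac:(lra) Hz).
    assert (Ehz : h z = (RtoC eps + RtoC (- (sg * B)) + remainder z)%C)
      by (unfold remainder; rewrite <- Hbz; ring).
    rewrite Ehz in Hrz.
    replace (fst (RtoC eps + RtoC (- (sg * B)) + remainder z)%C)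
      with (eps - sg * B + fst (remainder z)) in Hrz by (unfold RtoC; simpl; ring).
    pose proof (re_le_Cmod (remainder z)) as Hre. apply Rabs_le_between in Hre.
    unfold Re in Hre. unfold schwarz_const in Hzf. fold B in Hzf. nra. }
apply (Rmult_le_reg_r (sg / 2)). lra.
replace ((2 * eps / sg + 12 * sg) * (sg / 2)) with (eps + 6 * (sg * sg)) by (field; lra).
apply Rle_trans with (B * (sg - sg * sg)). apply Rmult_le_compat_l; nra.
nra.
Qed.

End SecondOrderSchwarz.

Lemma final_estimate k eps B sg eta : 0 <= k < 1 -> 0 <= eps -> 0 <= B -> 0 < sg ->
  sg <= eta / 48 -> eps < sg * eta / 12 -> B <= 2 * eps / sg + 12 * sg -> eps < 1 ->
  eps + B * k + (1 + eps + B) * (k * k) <= k ^ 2 + eta.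
Proof.
intros Hk He HB Hsg Hsg2 He3 HB1 He1.
assert (Hkk : k * k <= 1) by nra.
assert (X1 : eps + B * k + (1 + eps + B) * (k * k) <= k * k + 2 * eps + 2 * B) by nra.
assert (X2 : 4 * eps / sg <= eta / 3).
{ apply (Rmult_le_reg_r sg). lra. replace (4 * eps / sg * sg) with (4 * eps) by (field; lra). nra. }
assert (2 * eps / sg = (4 * eps / sg) / 2) by (field; lra).
replace (k ^ 2) with (k * k) by ring. nra.
Qed.

Theorem lemma3p1 (k : R) (hk0 : 0 <= k) (hk1 : k < 1) :
  forall eta : R, 0 < eta ->
  exists eps0 : R, 0 < eps0 /\
    forall (eps : R) (h : C -> C),
      0 <= eps -> eps < eps0 ->
      holomorphic_on_disk h ->
      maps_disk_to_disk h ->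
      h (RtoC 0) = RtoC eps ->
      (forall r : R, 0 < r < 1 ->
         forall z : C, Cmod z < r ->
           closed_ball (RtoC ((1 - r ^ 2) / 2)) ((1 + r ^ 2) / 2) (h z)) ->
      Cmod (h (RtoC k)) <= k ^ 2 + eta.
Proof.
intros eta Heta.
set (sg := Rmin (1/4) (eta / 48)).
assert (Hsg0 : 0 < sg) by (unfold sg; apply Rmin_pos; lra).
assert (Hsg1 : sg <= 1/4) by (unfold sg; apply Rmin_l).
assert (Hsg2 : sg <= eta / 48) by (unfold sg; apply Rmin_r).
exists (Rmin 1 (sg * eta / 12)). split.
{ apply Rmin_pos. lra. apply Rdiv_lt_0_compat. nra. lra. }
intros eps h He0 He1 Hhol Hmap H0 Hball.
assert (He2 : eps < 1) by (eapply Rlt_le_trans; [exact He1 | apply Rmin_l]).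
assert (He3 : eps < sg * eta / 12) by (eapply Rlt_le_trans; [exact He1 | apply Rmin_r]).
destruct (Hhol (RtoC 0)) as [b1 Hb1]. { rewrite Cmod_0. lra. }
pose proof (derivative_bound h eps Hhol Hmap H0 He0 b1 Hb1 sg Hball ltac:(lra) He2) as HB.
pose proof (remainder_bound h eps Hhol Hmap H0 He0 b1 Hb1 (RtoC k)) as Hk.
rewrite Cmod_R, Rabs_pos_eq in Hk by lra. specialize (Hk ltac:(lra)).
replace (h (RtoC k)) with (RtoC eps + b1 * RtoC k + remainder h eps b1 (RtoC k))%C
  by (unfold remainder; ring).
eapply Rle_trans. apply Cmod_triangle.
eapply Rle_trans. apply Rplus_le_compat_r. apply Cmod_triangle.
rewrite Cmod_mult, !Cmod_R, (Rabs_pos_eq eps), (Rabs_pos_eq k) by lra.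
unfold schwarz_const in Hk.
eapply Rle_trans; [| apply (final_estimate k eps (Cmod b1) sg eta); auto; try lra; apply Cmod_ge_0].
lra.
Qed.
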